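(* For $A=\mathbb{F}_8$ with calculus as in the context, the Laplacians $\Delta$ (all satisfying $\Delta1=0$) arising from the QLCs of the metrics $\beta g_0$ are as follows. For $\beta=y^2$: the 12 QLCs give exactly three distinct Laplacians, each arising from exactly four QLCs: $(\Delta y,\Delta y^2)=(0,\,y^2)$, $(0,\,1+y+y^2)$, $(y^2,\,1)$. For $\beta=1+y^2$: exactly three, each from four QLCs: $(\Delta y,\Delta y^2)=(y,\,0)$, $(1+y+y^2,\,0)$, $(y+y^2,\,1+y+y^2)$. For $\beta=1+y$: exactly three, each from four QLCs: $(\Delta y,\Delta y^2)=(y^2,\,y^2)$, $(y,\,y)$, $(1,\,1+y)$. For $\beta=y$: $\Delta=0$ for all four QLCs. In particular, exactly six of these Laplacians have a nonzero solution $v$ of $\Delta v=v$, namely $v=y^2$, $1+y+y^2$ (for $\beta=y^2$), $v=y$, $1+y+y^2$ (for $\beta=1+y^2$), $v=y^2$, $y$ (for $\beta=1+y$), in the order listed above.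
   Context: Algebra F: $A=\mathbb{F}_2[y]/(y^3+y^2+1)\cong\mathbb{F}_8$ with $x=y^2$. $\Omega^1$ is free as a left module on $\omega^1=\mathrm{d}x$, $\omega^2=\mathrm{d}y$, with $\omega^1x=(1+x)\omega^1+\omega^2$, $\omega^1y=\omega^1+x\omega^2$, $\omega^2x=(1+y)\omega^1$, $\omega^2y=\omega^1+y\omega^2$. $\Omega^2=A\,\mathrm{Vol}$ free, $\mathrm{Vol}$ central, $\omega^1\wedge\omega^1=y\,\mathrm{Vol}$, $\omega^1\wedge\omega^2=\omega^2\wedge\omega^1=\mathrm{Vol}$, $\omega^2\wedge\omega^2=(1+y)\mathrm{Vol}$, $\mathrm{d}\omega^i=0$. $g_0=y^2\,\omega^1\otimes\omega^1+\omega^1\otimes\omega^2+\omega^2\otimes\omega^1+(1+y)\,\omega^2\otimes\omega^2$ and $\beta g_0$ ($0\ne\beta\in A$) are the invertible central quantum symmetric metrics, with inverse bimodule map $(\ ,\ ):\Omega^1\otimes_A\Omega^1\to A$ satisfying $((\eta,\ )\otimes\mathrm{id})g=\eta=(\mathrm{id}\otimes(\ ,\eta))g$. A QLC for $g$ is a bimodule connection ($\nabla(a\omega)=a\nabla\omega+\mathrm{d}a\otimes\omega$, $\nabla(\omega a)=(\nabla\omega)a+\sigma(\omega\otimes\mathrm{d}a)$, $\sigma$ a bimodule map) that is torsion free ($\wedge\nabla=\mathrm{d}$) and metric compatible ($(\nabla\otimes\mathrm{id})g+(\sigma\otimes\mathrm{id})(\mathrm{id}\otimes\nabla)g=0$).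 The Laplacian is $\Delta=(\ ,\ )\nabla\mathrm{d}:A\to A$. *)

(* Algebra F of the paper: A = F_2[y]/(y^3+y^2+1) = F_8 with
   its 2-dimensional differential calculus, quantum metrics beta*g0, QLCs and
   Laplacians.  Everything is modelled concretely on finite types, using the
   left bases given in the paper. *)
From HB Require Import structures.
From mathcomp Require Import all_boot all_order all_algebra.
Set Implicit Arguments. Unset Strict Implicit. Unset Printing Implicit Defensive.

(* (a0, a1, a2) : A  represents  a0 + a1 y + a2 y^2  with a_i in F_2 = bool. *)
Notation A := (bool * bool * bool)%type.

Definition mkA (b0 b1 b2 : bool) : A := (b0, b1, b2).
Definition zeroA : A := mkA false false false.
Definition oneA  : A := mkA true false false.
Definition yA    : A := mkA false true false.
Definition xA    : A := mkA false false true.   (* x = y^2 *)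

Definition addF8 (a b : A) : A :=
  mkA (xorb a.1.1 b.1.1) (xorb a.1.2 b.1.2) (xorb a.2 b.2).
(* multiplication by y, using the relation y^3 = y^2 + 1 *)
Definition muly (b : A) : A := mkA b.2 b.1.1 (xorb b.1.2 b.2).
Definition scalA (c : bool) (b : A) : A := if c then b else zeroA.
Definition mulF8 (a b : A) : A :=
  addF8 (scalA a.1.1 b) (addF8 (scalA a.1.2 (muly b)) (scalA a.2 (muly (muly b)))).

(* ---------- Omega^1 : free left module on omega^1 = dx (index 0), omega^2 = dy (index 1) *)
Notation Om1 := {ffun 'I_2 -> A}.
Definition mk1 (c1 c2 : A) : Om1 := [ffun i : 'I_2 => if val i == 0 then c1 else c2].
Definition om (i : 'I_2) : Om1 := [ffun j => if j == i then oneA else zeroA].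
Definition zero1 : Om1 := [ffun _ => zeroA].
Definition add1 (w v : Om1) : Om1 := [ffun i => addF8 (w i) (v i)].
Definition lmul1 (a : A) (w : Om1) : Om1 := [ffun i => mulF8 a (w i)].

(* bimodule relations: omega^i y and omega^i x *)
Definition om_y (i : 'I_2) : Om1 :=
  if val i == 0 then mk1 oneA xA
  else mk1 oneA yA.
Definition om_x (i : 'I_2) : Om1 :=
  if val i == 0 then mk1 (addF8 oneA xA) oneA
  else mk1 (addF8 oneA yA) zeroA.
Definition om_r (i : 'I_2) (a : A) : Om1 :=
  add1 (if a.1.1 then om i else zero1)
       (add1 (if a.1.2 then om_y i else zero1) (if a.2 then om_x i else zero1)).
Definition rmul1 (w : Om1) (a : A) : Om1 :=
  \big[add1/zero1]_(i < 2) lmul1 (w i) (om_r i a).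

Definition d (a : A) : Om1 := mk1 (scalA a.2 oneA) (scalA a.1.2 oneA).

(* ---------- Omega^1 (x)_A Omega^1 : free left module on omega^k (x) omega^j *)
Notation Om2 := {ffun 'I_2 * 'I_2 -> A}.
Definition zero2 : Om2 := [ffun _ => zeroA].
Definition add2 (T U : Om2) : Om2 := [ffun kj => addF8 (T kj) (U kj)].
Definition lmul2 (a : A) (T : Om2) : Om2 := [ffun kj => mulF8 a (T kj)].
(* w (x) v  =  sum_j (w . v_j) (x) omega^j *)
Definition tens (w v : Om1) : Om2 := [ffun kj => rmul1 w (v kj.2) kj.1].
Definition om2 (k j : 'I_2) : Om2 := tens (om k) (om j).
Definition rmul2 (T : Om2) (a : A) : Om2 :=
  \big[add2/zero2]_(kj : 'I_2 * 'I_2) tens (lmul1 (T kj) (om kj.1)) (rmul1 (om kj.2) a).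

(* ---------- Omega^2 = A Vol, wedge product (Vol-coefficient) *)
Definition wedge_basis (kj : 'I_2 * 'I_2) : A :=
  match val kj.1, val kj.2 with
  | 0, 0 => yA
  | 1, 1 => addF8 oneA yA
  | _, _ => oneA
  end.
Definition wedge (T : Om2) : A :=
  \big[addF8/zeroA]_(kj : 'I_2 * 'I_2) mulF8 (T kj) (wedge_basis kj).
(* d on Omega^1:  d(a omega^i) = da ^ omega^i  (since d omega^i = 0) *)
Definition d1 (w : Om1) : A :=
  \big[addF8/zeroA]_(i < 2) wedge (tens (d (w i)) (om i)).

Notation Om3 := {ffun 'I_2 * 'I_2 * 'I_2 -> A}.
Definition zero3 : Om3 := [ffun _ => zeroA].
Definition add3 (X Y : Om3) : Om3 := [ffun i => addF8 (X i) (Y i)].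
Definition tens12 (w : Om1) (U : Om2) : Om3 :=
  [ffun mbc => rmul1 w (U (mbc.1.2, mbc.2)) mbc.1.1].
Definition tens21 (T : Om2) (v : Om1) : Om3 :=
  \big[add3/zero3]_(ab : 'I_2 * 'I_2)
     tens12 (lmul1 (T ab) (om ab.1)) (tens (om ab.2) v).
(* (s (x) id) X  for a left-linear s *)
Definition sigma_id (s : Om2 -> Om2) (X : Om3) : Om3 :=
  \big[add3/zero3]_(mab : 'I_2 * 'I_2 * 'I_2)
     tens21 (s (lmul2 (X mab) (om2 mab.1.1 mab.1.2))) (om mab.2).

Definition g0 : Om2 := [ffun kj : 'I_2 * 'I_2 =>
  match val kj.1, val kj.2 with
  | 0, 0 => xA
  | 1, 1 => addF8 oneA yA
  | _, _ => oneA
  end].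
Definition gmetric (beta : A) : Om2 := lmul2 beta g0.

Definition bimod_map2 (s : {ffun Om2 -> Om2}) : bool :=
  [&& [forall T : Om2, forall U : Om2, s (add2 T U) == add2 (s T) (s U)],
      [forall a : A, forall T : Om2, s (lmul2 a T) == lmul2 a (s T)] &
      [forall a : A, forall T : Om2, s (rmul2 T a) == rmul2 (s T) a]].

Definition is_inv_metric (g : Om2) (ip : {ffun Om2 -> A}) : bool :=
  [&& [forall T : Om2, forall U : Om2, ip (add2 T U) == addF8 (ip T) (ip U)],
      [forall a : A, forall T : Om2, ip (lmul2 a T) == mulF8 a (ip T)],
      [forall a : A, forall T : Om2, ip (rmul2 T a) == mulF8 (ip T) a],
      (* ((eta, ) (x) id) g = eta ,   g = sum_kj (g_kj omega^k) (x) omega^j *)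
      [forall eta : Om1,
         \big[add1/zero1]_(kj : 'I_2 * 'I_2)
            lmul1 (ip (tens eta (lmul1 (g kj) (om kj.1)))) (om kj.2) == eta] &
      [forall eta : Om1,
         \big[add1/zero1]_(kj : 'I_2 * 'I_2)
            rmul1 (lmul1 (g kj) (om kj.1)) (ip (tens (om kj.2) eta)) == eta]].

Definition is_QLC (g : Om2) (nabla : {ffun Om1 -> Om2}) (sigma : {ffun Om2 -> Om2}) : bool :=
  [&&
      [forall w : Om1, forall v : Om1, nabla (add1 w v) == add2 (nabla w) (nabla v)],
      [forall a : A, forall w : Om1,
         nabla (lmul1 a w) == add2 (lmul2 a (nabla w)) (tens (d a) w)],
      [forall a : A, forall w : Om1,
         nabla (rmul1 w a) == add2 (rmul2 (nabla w) a) (sigma (tens w (d a)))],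
      bimod_map2 sigma,
      [forall w : Om1, wedge (nabla w) == d1 w] &
      \big[add3/zero3]_(kj : 'I_2 * 'I_2)
         add3 (tens21 (nabla (lmul1 (g kj) (om kj.1))) (om kj.2))
              (sigma_id sigma (tens12 (lmul1 (g kj) (om kj.1)) (nabla (om kj.2))))
      == zero3].

Definition QLCs (g : Om2) : {set {ffun Om1 -> Om2} * {ffun Om2 -> Om2}} :=
  [set p | is_QLC g p.1 p.2].

Definition laplacian (ip : {ffun Om2 -> A}) (nabla : {ffun Om1 -> Om2}) : {ffun A -> A} :=
  [ffun a => ip (nabla (d a))].

Definition lapl_of (u v : A) : {ffun A -> A} :=
  [ffun a : A => addF8 (scalA a.1.2 u) (scalA a.2 v)].

Definition QLC_laplacians (g : Om2) (Ls : seq {ffun A -> A}) (n : nat) : Prop :=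
  (exists ip, is_inv_metric g ip) /\
  forall ip, is_inv_metric g ip ->
    [/\ #|QLCs g| = (n * size Ls)%N,
        forall p, p \in QLCs g -> laplacian ip p.1 \in Ls &
        forall L, L \in Ls -> #|[set p in QLCs g | laplacian ip p.1 == L]| = n].

Definition eigen1 (L : {ffun A -> A}) : {set A} := [set v | (v != zeroA) && (L v == v)].

(* Every module in sight is free over A, so we pass to
   coordinates: Omega^1 = A^2, Omega^1 (x) Omega^1 = A^4 and the triple
   tensor product = A^8.  In coordinates:
   - a connection satisfying the left Leibniz rule is determined by the two
     values N0 = nabla omega^1, N1 = nabla omega^2 in A^4; the right Leibniz
     rule then forces the generalised braiding sigma on the basis
     omega^i (x) omega^j = omega^i (x) d(x or y), torsion freeness says
     wedge N0 = wedge N1 = 0, and metric compatibility becomes a system of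
     8 equations in A, i.e. 24 quadratic equations over F_2 in the 18 free
     bits of (N0, N1);
   - an inverse metric ( , ) is determined by its 4 values on basis tensors.
   Hence the QLCs of beta g0 correspond to the solutions (N0, N1) of an
   explicit finite system.  All coordinate formulas are written once, over an
   arbitrary carrier with addition, multiplication and constants, so that they
   can be evaluated both in A and on symbolic F_2-polynomials in the 18 bits.
   The symbolic evaluation yields F_2-linear combinations of the 24 equations
   in which the variables of N0 and N1 separate; this allows a
   meet-in-the-middle enumeration of all solutions, proved complete. *)

From HB Require Import structures.
From mathcomp Require Import all_boot all_order all_algebra.
Set Implicit Arguments. Unset Strict Implicit. Unset Printing Implicit Defensive.

Lemma addF8A : associative addF8.
Proof. by move=> [[[] []] []] [[[] []] []] [[[] []] []]. Qed.
Lemma addF8C : commutative addF8.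
Proof. by move=> [[[] []] []] [[[] []] []]. Qed.
Lemma add0F8 : left_id zeroA addF8.
Proof. by move=> [[[] []] []]. Qed.
Lemma addF80 : right_id zeroA addF8.
Proof. by move=> [[[] []] []]. Qed.
Lemma mulF8A : associative mulF8.
Proof. by move=> [[[] []] []] [[[] []] []] [[[] []] []]. Qed.
Lemma mulF8C : commutative mulF8.
Proof. by move=> [[[] []] []] [[[] []] []]. Qed.
Lemma mulF8Dl : left_distributive mulF8 addF8.
Proof. by move=> [[[] []] []] [[[] []] []] [[[] []] []]. Qed.
Lemma mulF8Dr : right_distributive mulF8 addF8.
Proof. by move=> [[[] []] []] [[[] []] []] [[[] []] []]. Qed.
Lemma mul1F8 : left_id oneA mulF8.
Proof. by move=> [[[] []] []]. Qed.
Lemma mulF81 : right_id oneA mulF8.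
Proof. by move=> [[[] []] []]. Qed.
Lemma mul0F8 : left_zero zeroA mulF8.
Proof. by move=> [[[] []] []]. Qed.
Lemma mulF80 : right_zero zeroA mulF8.
Proof. by move=> [[[] []] []]. Qed.

Lemma addF8ACA a b c e : addF8 (addF8 a b) (addF8 c e) = addF8 (addF8 a c) (addF8 b e).
Proof. by rewrite -!addF8A (addF8A b) (addF8C b) !addF8A. Qed.

Lemma addF8_solve a b c : a = addF8 b c -> c = addF8 a b.
Proof. by move=> ->; move: b c => [[[] []] []] [[[] []] []]. Qed.

(* (1 + y)^-1 = y^2 in F_8. *)
Lemma mul_x_1y a : mulF8 xA (mulF8 (addF8 oneA yA) a) = a.
Proof. by move: a => [[[] []] []]. Qed.

HB.instance Definition _ := Monoid.isComLaw.Build A zeroA addF8 addF8A addF8C add0F8.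

Section PointwiseAdd.
Variable I : finType.
Definition addI (f g : {ffun I -> A}) : {ffun I -> A} := [ffun i => addF8 (f i) (g i)].
Definition zeroI : {ffun I -> A} := [ffun _ => zeroA].
Lemma addIA : associative addI.
Proof. by move=> f g h; apply/ffunP => i; rewrite !ffunE addF8A. Qed.
Lemma addIC : commutative addI.
Proof. by move=> f g; apply/ffunP => i; rewrite !ffunE addF8C. Qed.
Lemma add0I : left_id zeroI addI.
Proof. by move=> f; apply/ffunP => i; rewrite !ffunE add0F8. Qed.
End PointwiseAdd.

HB.instance Definition _ := Monoid.isComLaw.Build Om1 zero1 add1 (@addIA _) (@addIC _) (@add0I _).
HB.instance Definition _ := Monoid.isComLaw.Build Om2 zero2 add2 (@addIA _) (@addIC _) (@add0I _).
HB.instance Definition _ := Monoid.isComLaw.Build Om3 zero3 add3 (@addIA _) (@addIC _) (@add0I _).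

Definition o0 : 'I_2 := ord0.
Definition o1 : 'I_2 := lift ord0 ord0.
Lemma I2P (i : 'I_2) : i = o0 \/ i = o1.
Proof. case: i => [[|[|?]] Hi] //; [left|right]; exact: val_inj. Qed.

(* Index 0 is read as false and index 1 as true. *)
Definition bo (i : 'I_2) : bool := val i != 0.

Section BigI2.
Variables (R : Type) (z : R) (op : Monoid.com_law z).

Lemma big_I2 (F : 'I_2 -> R) : \big[op/z]_(i < 2) F i = op (F o0) (F o1).
Proof. by rewrite big_ord_recl big_ord_recl big_ord0 Monoid.mulm1. Qed.

Lemma big_I22 (F : 'I_2 * 'I_2 -> R) :
  \big[op/z]_(p : 'I_2 * 'I_2) F p =
  op (op (F (o0, o0)) (F (o0, o1))) (op (F (o1, o0)) (F (o1, o1))).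
Proof.
rewrite (eq_bigr (fun p => (fun i j => F (i, j)) p.1 p.2)); last by case.
by rewrite -(pair_bigA _ (fun i j => F (i, j))) big_I2 !big_I2.
Qed.

Lemma big_I222 (F : 'I_2 * 'I_2 * 'I_2 -> R) :
  \big[op/z]_(p : 'I_2 * 'I_2 * 'I_2) F p =
  op (op (op (F (o0, o0, o0)) (F (o0, o0, o1))) (op (F (o0, o1, o0)) (F (o0, o1, o1))))
     (op (op (F (o1, o0, o0)) (F (o1, o0, o1))) (op (F (o1, o1, o0)) (F (o1, o1, o1)))).
Proof.
rewrite (eq_bigr (fun p => (fun i j => F (i, j)) p.1 p.2)); last by case.
by rewrite -(pair_bigA _ (fun i j => F (i, j))) big_I22 !big_I2.
Qed.

End BigI2.

(* An element of Omega^1 is a pair (w1, w2) standing for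
   w1 omega^1 + w2 omega^2, an element of the tensor square is a record of the
   left coefficients of omega^i (x) omega^j, an element of the tensor cube an
   8-tuple of coefficients.  The formulas below use only an addition [ad], a
   multiplication [mu], constants [k] from A, the right action on the basis
   [rf] (omega^i a = (rf a)_i1 omega^1 + (rf a)_i2 omega^2) and the derivative
   [df] (da = (df a).1 omega^1 + (df a).2 omega^2), so that they can later be
   evaluated both in A and on symbolic polynomials. *)

Record V4 (T : Type) := mkV4 { v00 : T; v01 : T; v10 : T; v11 : T }.
Record V8 (T : Type) := mkV8 { e000 : T; e001 : T; e010 : T; e011 : T;
                                e100 : T; e101 : T; e110 : T; e111 : T }.
Arguments mkV4 {T}. Arguments mkV8 {T}.

Definition eqV4 (T : eqType) (P Q : V4 T) :=
  [&& v00 P == v00 Q, v01 P == v01 Q, v10 P == v10 Q & v11 P == v11 Q].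
Lemma eqV4P (T : eqType) : Equality.axiom (@eqV4 T).
Proof.
move=> [a b c e] [a' b' c' e']; rewrite /eqV4 /=.
apply: (iffP idP) => [/and4P [/eqP -> /eqP -> /eqP -> /eqP ->] // | [-> -> -> ->]].
by rewrite !eqxx.
Qed.
HB.instance Definition _ (T : eqType) := hasDecEq.Build (V4 T) (@eqV4P T).

Definition tuple8 (T : Type) (X : V8 T) :=
  (e000 X, e001 X, e010 X, e011 X, e100 X, e101 X, e110 X, e111 X).
Definition eqV8 (T : eqType) (X Y : V8 T) := tuple8 X == tuple8 Y.
Lemma eqV8P (T : eqType) : Equality.axiom (@eqV8 T).
Proof.
move=> [a b c e f g h i] [a' b' c' e' f' g' h' i']; rewrite /eqV8 /tuple8 /=.
by apply: (iffP eqP) => [[-> -> -> -> -> -> -> ->] | [-> -> -> -> -> -> -> ->]].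
Qed.
HB.instance Definition _ (T : eqType) := hasDecEq.Build (V8 T) (@eqV8P T).

Section Formulas.
Variables (T : Type) (ad mu : T -> T -> T) (k : A -> T).
Variables (rf : T -> V4 T) (df : T -> T * T).

Definition zero_f : T := k zeroA.
Definition one_f : T := k oneA.

Definition add1_f (w v : T * T) : T * T := (ad w.1 v.1, ad w.2 v.2).
Definition lmul1_f (a : T) (w : T * T) : T * T := (mu a w.1, mu a w.2).
(* omega^1 is coded by false, omega^2 by true *)
Definition basis1_f (b : bool) : T * T := if b then (zero_f, one_f) else (one_f, zero_f).
Definition rmul1_f (w : T * T) (a : T) : T * T :=
  (ad (mu w.1 (v00 (rf a))) (mu w.2 (v10 (rf a))),
   ad (mu w.1 (v01 (rf a))) (mu w.2 (v11 (rf a)))).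

Definition add2_f (P Q : V4 T) : V4 T :=
  mkV4 (ad (v00 P) (v00 Q)) (ad (v01 P) (v01 Q)) (ad (v10 P) (v10 Q)) (ad (v11 P) (v11 Q)).
Definition lmul2_f (a : T) (P : V4 T) : V4 T :=
  mkV4 (mu a (v00 P)) (mu a (v01 P)) (mu a (v10 P)) (mu a (v11 P)).
(* w (x) v = (w v1) (x) omega^1 + (w v2) (x) omega^2 *)
Definition tens_f (w v : T * T) : V4 T :=
  let r1 := rmul1_f w v.1 in let r2 := rmul1_f w v.2 in mkV4 r1.1 r2.1 r1.2 r2.2.
Definition basis2_f (i j : bool) : V4 T := tens_f (basis1_f i) (basis1_f j).
(* (sum P_ij omega^i (x) omega^j) a = sum (P_ij omega^i) (x) (omega^j a) *)
Definition rmul2_f (P : V4 T) (a : T) : V4 T :=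
  add2_f (add2_f (tens_f (lmul1_f (v00 P) (basis1_f false)) (rmul1_f (basis1_f false) a))
                 (tens_f (lmul1_f (v01 P) (basis1_f false)) (rmul1_f (basis1_f true) a)))
         (add2_f (tens_f (lmul1_f (v10 P) (basis1_f true)) (rmul1_f (basis1_f false) a))
                 (tens_f (lmul1_f (v11 P) (basis1_f true)) (rmul1_f (basis1_f true) a))).
Definition wedge_f (P : V4 T) : T :=
  ad (ad (mu (v00 P) (k yA)) (mu (v01 P) one_f))
     (ad (mu (v10 P) one_f) (mu (v11 P) (k (addF8 oneA yA)))).

Definition add3_f (X Y : V8 T) : V8 T := mkV8
  (ad (e000 X) (e000 Y)) (ad (e001 X) (e001 Y)) (ad (e010 X) (e010 Y))
  (ad (e011 X) (e011 Y)) (ad (e100 X) (e100 Y)) (ad (e101 X) (e101 Y))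
  (ad (e110 X) (e110 Y)) (ad (e111 X) (e111 Y)).
(* w (x) U = sum_ij (w U_ij) (x) omega^i (x) omega^j *)
Definition tens12_f (w : T * T) (U : V4 T) : V8 T :=
  let r00 := rmul1_f w (v00 U) in let r01 := rmul1_f w (v01 U) in
  let r10 := rmul1_f w (v10 U) in let r11 := rmul1_f w (v11 U) in
  mkV8 r00.1 r01.1 r10.1 r11.1 r00.2 r01.2 r10.2 r11.2.
(* P (x) v = sum_ij (P_ij omega^i) (x) (omega^j (x) v) *)
Definition tens21_f (P : V4 T) (v : T * T) : V8 T :=
  add3_f (add3_f (tens12_f (lmul1_f (v00 P) (basis1_f false)) (tens_f (basis1_f false) v))
                 (tens12_f (lmul1_f (v01 P) (basis1_f false)) (tens_f (basis1_f true) v)))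
         (add3_f (tens12_f (lmul1_f (v10 P) (basis1_f true)) (tens_f (basis1_f false) v))
                 (tens12_f (lmul1_f (v11 P) (basis1_f true)) (tens_f (basis1_f true) v))).
(* (s (x) id) X, for a left linear map s: the term of the basis tensor
   omega^i (x) omega^j (x) omega^l with coefficient c is s (c omega^i (x) omega^j) (x) omega^l *)
Definition sigma_id_term_f (s : V4 T -> V4 T) (c : T) (i j l : bool) : V8 T :=
  tens21_f (s (lmul2_f c (basis2_f i j))) (basis1_f l).
Definition sigma_id_f (s : V4 T -> V4 T) (X : V8 T) : V8 T :=
  add3_f (add3_f (add3_f (sigma_id_term_f s (e000 X) false false false)
                         (sigma_id_term_f s (e001 X) false false true))
                 (add3_f (sigma_id_term_f s (e010 X) false true false)
                         (sigma_id_term_f s (e011 X) false true true)))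
         (add3_f (add3_f (sigma_id_term_f s (e100 X) true false false)
                         (sigma_id_term_f s (e101 X) true false true))
                 (add3_f (sigma_id_term_f s (e110 X) true true false)
                         (sigma_id_term_f s (e111 X) true true true))).

(* The connection with nabla omega^1 = N0, nabla omega^2 = N1 and the left
   Leibniz rule: nabla (w1 omega^1 + w2 omega^2) = sum_i w_i N_i + dw_i (x) omega^i. *)
Definition nabla_f (N0 N1 : V4 T) (w : T * T) : V4 T :=
  add2_f (add2_f (lmul2_f w.1 N0) (tens_f (df w.1) (basis1_f false)))
         (add2_f (lmul2_f w.2 N1) (tens_f (df w.2) (basis1_f true))).
Definition sigma_f (S : V4 (V4 T)) (P : V4 T) : V4 T :=
  add2_f (add2_f (lmul2_f (v00 P) (v00 S)) (lmul2_f (v01 P) (v01 S)))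
         (add2_f (lmul2_f (v10 P) (v10 S)) (lmul2_f (v11 P) (v11 S))).
(* The values of sigma forced by the right Leibniz rule: since dx = omega^1
   and dy = omega^2, sigma (omega^i (x) omega^j) = nabla (omega^i a) + (nabla omega^i) a
   with a = x for j = 1 and a = y for j = 2. *)
Definition braiding_f (N0 N1 : V4 T) : V4 (V4 T) :=
  mkV4 (add2_f (nabla_f N0 N1 (rmul1_f (basis1_f false) (k xA))) (rmul2_f N0 (k xA)))
       (add2_f (nabla_f N0 N1 (rmul1_f (basis1_f false) (k yA))) (rmul2_f N0 (k yA)))
       (add2_f (nabla_f N0 N1 (rmul1_f (basis1_f true) (k xA))) (rmul2_f N1 (k xA)))
       (add2_f (nabla_f N0 N1 (rmul1_f (basis1_f true) (k yA))) (rmul2_f N1 (k yA))).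
Definition metric_term_f (N0 N1 : V4 T) (gij : T) (i j : bool) : V8 T :=
  add3_f (tens21_f (nabla_f N0 N1 (lmul1_f gij (basis1_f i))) (basis1_f j))
         (sigma_id_f (sigma_f (braiding_f N0 N1))
                     (tens12_f (lmul1_f gij (basis1_f i)) (nabla_f N0 N1 (basis1_f j)))).
Definition metric_f (g : V4 T) (N0 N1 : V4 T) : V8 T :=
  add3_f (add3_f (metric_term_f N0 N1 (v00 g) false false)
                 (metric_term_f N0 N1 (v01 g) false true))
         (add3_f (metric_term_f N0 N1 (v10 g) true false)
                 (metric_term_f N0 N1 (v11 g) true true)).

End Formulas.

(* The right action and the derivative are F_2-linear in a, and every
   F_2-linear endomorphism of F_8 has the form a |-> al a + be a^2 + ga a^4.
   Writing them in this form lets them be evaluated on symbolic elements. *)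
Section Frobenius.
Variables (T : Type) (ad mu : T -> T -> T) (k : A -> T).

Definition frob_lin (al be ga : A) (a : T) : T :=
  let a2 := mu a a in ad (mu (k al) a) (ad (mu (k be) a2) (mu (k ga) (mu a2 a2))).
Definition ract_frob (a : T) : V4 T :=
  mkV4 (frob_lin zeroA yA (addF8 oneA yA) a)
       (frob_lin zeroA (addF8 oneA (addF8 yA xA)) (addF8 oneA (addF8 yA xA)) a)
       (frob_lin zeroA xA xA a) (frob_lin zeroA (addF8 oneA yA) yA a).
Definition deriv_frob (a : T) : T * T :=
  (frob_lin (addF8 oneA yA) (addF8 oneA xA) (addF8 yA xA) a,
   frob_lin (addF8 oneA xA) (addF8 yA xA) (addF8 oneA yA) a).

End Frobenius.

(* The same right action and derivative of A, tabulated for fast evaluation: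
   omega^1 a = v00 omega^1 + v01 omega^2 and omega^2 a = v10 omega^1 + v11 omega^2
   for (v00, v01, v10, v11) = ract_tab a, and da = (deriv_tab a).1 omega^1 +
   (deriv_tab a).2 omega^2. *)
Definition ract_tab (a : A) : V4 A :=
  match a with
  | (false, false, false) =>
      mkV4 (false, false, false) (false, false, false) (false, false, false) (false, false, false)
  | (true, false, false) =>
      mkV4 (true, false, false) (false, false, false) (false, false, false) (true, false, false)
  | (false, true, false) =>
      mkV4 (true, false, false) (false, false, true) (true, false, false) (false, true, false)
  | (true, true, false) =>
      mkV4 (false, false, false) (false, false, true) (true, false, false) (true, true, false)
  | (false, false, true) =>
      mkV4 (true, false, true) (true, false, false) (true, true, false) (false, false, false)
  | (true, false, true) =>
      mkV4 (false, false, true) (true, false, false) (true, true, false) (true, false, false)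
  | (false, true, true) =>
      mkV4 (false, false, true) (true, false, true) (false, true, false) (false, true, false)
  | (true, true, true) =>
      mkV4 (true, false, true) (true, false, true) (false, true, false) (true, true, false)
  end.
Definition deriv_tab (a : A) : A * A :=
  match a with
  | (false, false, false) | (true, false, false) => (zeroA, zeroA)
  | (false, true, false) | (true, true, false) => (zeroA, oneA)
  | (false, false, true) | (true, false, true) => (oneA, zeroA)
  | (false, true, true) | (true, true, true) => (oneA, oneA)
  end.

Lemma ract_frob_tab a : ract_frob addF8 mulF8 id a = ract_tab a.
Proof. by case: a => [[[] []] []]. Qed.
Lemma deriv_frob_tab a : deriv_frob addF8 mulF8 id a = deriv_tab a.
Proof. by case: a => [[[] []] []]. Qed.

Notation add1_c := (add1_f addF8).
Notation lmul1_c := (lmul1_f mulF8).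
Notation basis1_c := (basis1_f id).
Notation rmul1_c := (rmul1_f addF8 mulF8 ract_tab).
Notation add2_c := (add2_f addF8).
Notation lmul2_c := (lmul2_f mulF8).
Notation tens_c := (tens_f addF8 mulF8 ract_tab).
Notation rmul2_c := (rmul2_f addF8 mulF8 id ract_tab).
Notation wedge_c := (wedge_f addF8 mulF8 id).
Notation add3_c := (add3_f addF8).
Notation tens12_c := (tens12_f addF8 mulF8 ract_tab).
Notation tens21_c := (tens21_f addF8 mulF8 id ract_tab).
Notation sigma_id_c := (sigma_id_f addF8 mulF8 id ract_tab).
Notation nabla_c := (nabla_f addF8 mulF8 id ract_tab deriv_tab).
Notation sigma_c := (sigma_f addF8 mulF8).
Notation braiding_c := (braiding_f addF8 mulF8 id ract_tab deriv_tab).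
Notation metric_c := (metric_f addF8 mulF8 id ract_tab deriv_tab).

Definition zero8 : V8 A := mkV8 zeroA zeroA zeroA zeroA zeroA zeroA zeroA zeroA.
Definition g0_c : V4 A := mkV4 xA oneA oneA (addF8 oneA yA).
Definition d1_c (w : A * A) : A :=
  addF8 (wedge_c (tens_c (deriv_tab w.1) (basis1_c false)))
        (wedge_c (tens_c (deriv_tab w.2) (basis1_c true))).

Lemma add2_solve (X Y Z : V4 A) : X = add2_c Y Z -> Z = add2_c X Y.
Proof.
case: X Y Z => [? ? ? ?] [? ? ? ?] [? ? ? ?] [E1 E2 E3 E4].
by rewrite /add2_f /= -(addF8_solve E1) -(addF8_solve E2) -(addF8_solve E3) -(addF8_solve E4).
Qed.

Definition c1 (w : Om1) : A * A := (w o0, w o1).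
Definition c2 (T : Om2) : V4 A := mkV4 (T (o0, o0)) (T (o0, o1)) (T (o1, o0)) (T (o1, o1)).
Definition c3 (X : Om3) : V8 A := mkV8 (X (o0, o0, o0)) (X (o0, o0, o1)) (X (o0, o1, o0))
  (X (o0, o1, o1)) (X (o1, o0, o0)) (X (o1, o0, o1)) (X (o1, o1, o0)) (X (o1, o1, o1)).

Lemma c1_inj : injective c1.
Proof. by move=> w v [E0 E1]; apply/ffunP => i; case: (I2P i) => ->. Qed.
Lemma c2_inj : injective c2.
Proof.
move=> w v [E0 E1 E2 E3]; apply/ffunP => -[i j].
by case: (I2P i) => ->; case: (I2P j) => ->.
Qed.
Lemma c3_inj : injective c3.
Proof.
move=> w v [E0 E1 E2 E3 E4 E5 E6 E7]; apply/ffunP => -[[i j] l].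
by case: (I2P i) => ->; case: (I2P j) => ->; case: (I2P l) => ->.
Qed.

Definition coef2 (P : V4 A) (i j : bool) : A :=
  if i then (if j then v11 P else v10 P) else (if j then v01 P else v00 P).
Definition coef3 (X : V8 A) (i j l : bool) : A :=
  if i then (if j then (if l then e111 X else e110 X) else (if l then e101 X else e100 X))
  else (if j then (if l then e011 X else e010 X) else (if l then e001 X else e000 X)).
Lemma coef2_c2 (T : Om2) ij : T ij = coef2 (c2 T) (bo ij.1) (bo ij.2).
Proof. by case: ij => i j; case: (I2P i) => ->; case: (I2P j) => ->. Qed.
Lemma coef3_c3 (X : Om3) ijl : X ijl = coef3 (c3 X) (bo ijl.1.1) (bo ijl.1.2) (bo ijl.2).
Proof.
by case: ijl => [[i j] l]; case: (I2P i) => ->; case: (I2P j) => ->; case: (I2P l) => ->.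
Qed.

Definition mk2 (P : V4 A) : Om2 := [ffun ij : 'I_2 * 'I_2 => coef2 P (bo ij.1) (bo ij.2)].
Lemma c2_mk2 P : c2 (mk2 P) = P.
Proof. by case: P => *; rewrite /c2 !ffunE. Qed.

Lemma c1_mk1 a b : c1 (mk1 a b) = (a, b).
Proof. by rewrite /c1 !ffunE. Qed.
Lemma c1_zero1 : c1 zero1 = (zeroA, zeroA).
Proof. by rewrite /c1 !ffunE. Qed.
Lemma c1_add1 w v : c1 (add1 w v) = add1_c (c1 w) (c1 v).
Proof. by rewrite /c1 !ffunE. Qed.
Lemma c1_lmul1 a w : c1 (lmul1 a w) = lmul1_c a (c1 w).
Proof. by rewrite /c1 !ffunE. Qed.
Lemma c1_om i : c1 (om i) = basis1_c (bo i).
Proof. by case: (I2P i) => ->; rewrite /c1 !ffunE. Qed.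
Lemma c1_d a : c1 (d a) = deriv_tab a.
Proof. by rewrite /d c1_mk1; case: a => [[[] []] []]. Qed.

Lemma c1_om_r i a : c1 (om_r i a) =
  if bo i then (v10 (ract_tab a), v11 (ract_tab a)) else (v00 (ract_tab a), v01 (ract_tab a)).
Proof.
have c1_if b (w v : Om1) : c1 (if b then w else v) = if b then c1 w else c1 v by case: b.
by case: (I2P i) => ->; rewrite /om_r !c1_add1 !c1_if c1_om /om_y /om_x /= !c1_mk1 c1_zero1;
   case: a => [[[] []] []].
Qed.
Lemma c1_rmul1 w a : c1 (rmul1 w a) = rmul1_c (c1 w) a.
Proof. by rewrite /rmul1 big_I2 c1_add1 !c1_lmul1 !c1_om_r. Qed.

Lemma c2_add2 T U : c2 (add2 T U) = add2_c (c2 T) (c2 U).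
Proof. by rewrite /c2 !ffunE. Qed.
Lemma c2_lmul2 a T : c2 (lmul2 a T) = lmul2_c a (c2 T).
Proof. by rewrite /c2 !ffunE. Qed.
Lemma c2_tens w v : c2 (tens w v) = tens_c (c1 w) (c1 v).
Proof.
have E a i : rmul1 w a i = if bo i then (c1 (rmul1 w a)).2 else (c1 (rmul1 w a)).1.
  by case: (I2P i) => ->.
by rewrite /c2 /tens !ffunE /= !E !c1_rmul1.
Qed.
Lemma c2_om2 i j : c2 (om2 i j) = basis2_f addF8 mulF8 id ract_tab (bo i) (bo j).
Proof. by rewrite c2_tens !c1_om. Qed.
(* Coordinates of a sum of four terms, stated on variables so that rewriting
   never has to unfold the summands. *)
Lemma c2_add2_4 P Q R S :
  c2 (add2 (add2 P Q) (add2 R S)) = add2_c (add2_c (c2 P) (c2 Q)) (add2_c (c2 R) (c2 S)).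
Proof. by rewrite !c2_add2. Qed.
Lemma c2_rmul2 T a : c2 (rmul2 T a) = rmul2_c (c2 T) a.
Proof. by rewrite /rmul2 big_I22 /= c2_add2_4 !c2_tens !c1_lmul1 !c1_rmul1 !c1_om. Qed.
Lemma c2_gmetric beta : c2 (gmetric beta) = lmul2_c beta g0_c.
Proof. by rewrite /gmetric c2_lmul2 /c2 !ffunE. Qed.

Lemma wedge_coord T : wedge T = wedge_c (c2 T).
Proof. by rewrite /wedge big_I22. Qed.
Lemma d1_coord w : d1 w = d1_c (c1 w).
Proof. by rewrite /d1 big_I2 !wedge_coord !c2_tens !c1_d !c1_om. Qed.

Lemma c3_add3 X Y : c3 (add3 X Y) = add3_c (c3 X) (c3 Y).
Proof. by rewrite /c3 !ffunE. Qed.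
Lemma c3_zero3 : c3 zero3 = zero8.
Proof. by rewrite /c3 !ffunE. Qed.
Lemma c3_tens12 w U : c3 (tens12 w U) = tens12_c (c1 w) (c2 U).
Proof.
have E a i : rmul1 w a i = if bo i then (c1 (rmul1 w a)).2 else (c1 (rmul1 w a)).1.
  by case: (I2P i) => ->.
by rewrite /c3 /tens12 !ffunE /= !E !c1_rmul1.
Qed.
Lemma c3_add3_4 X Y Z U :
  c3 (add3 (add3 X Y) (add3 Z U)) = add3_c (add3_c (c3 X) (c3 Y)) (add3_c (c3 Z) (c3 U)).
Proof. by rewrite !c3_add3. Qed.

(* Stating these with an abstract [G] keeps rewriting cheap. *)
Lemma c3_big22 (F : 'I_2 * 'I_2 -> Om3) (G : bool -> bool -> V8 A) :
  (forall p, c3 (F p) = G (bo p.1) (bo p.2)) ->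
  c3 (\big[add3/zero3]_p F p) =
  add3_c (add3_c (G false false) (G false true)) (add3_c (G true false) (G true true)).
Proof. by move=> E; rewrite big_I22 c3_add3_4 !E. Qed.
Lemma c3_big222 (F : 'I_2 * 'I_2 * 'I_2 -> Om3) (G : bool -> bool -> bool -> V8 A) :
  (forall p, c3 (F p) = G (bo p.1.1) (bo p.1.2) (bo p.2)) ->
  c3 (\big[add3/zero3]_p F p) =
  add3_c (add3_c (add3_c (G false false false) (G false false true))
                 (add3_c (G false true false) (G false true true)))
         (add3_c (add3_c (G true false false) (G true false true))
                 (add3_c (G true true false) (G true true true))).
Proof. by move=> E; rewrite big_I222 c3_add3 !c3_add3_4 !E. Qed.

Lemma c3_tens21 T v : c3 (tens21 T v) = tens21_c (c2 T) (c1 v).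
Proof.
rewrite /tens21 (@c3_big22 _ (fun i j =>
  tens12_c (lmul1_c (coef2 (c2 T) i j) (basis1_c i)) (tens_c (basis1_c j) (c1 v)))) //.
by move=> p; rewrite c3_tens12 c2_tens c1_lmul1 !c1_om coef2_c2.
Qed.
Lemma c3_sigma_id (s : Om2 -> Om2) (f : V4 A -> V4 A) X :
  (forall T, c2 (s T) = f (c2 T)) -> c3 (sigma_id s X) = sigma_id_c f (c3 X).
Proof.
move=> Hs; rewrite /sigma_id (@c3_big222 _ (fun i j l => tens21_c
  (f (lmul2_c (coef3 (c3 X) i j l) (basis2_f addF8 mulF8 id ract_tab i j))) (basis1_c l))) //.
by move=> p; rewrite c3_tens21 Hs c2_lmul2 c2_om2 c1_om coef3_c3.
Qed.

Lemma Om1_decomp (w : Om1) : w = add1 (lmul1 (w o0) (om o0)) (lmul1 (w o1) (om o1)).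
Proof.
apply: c1_inj; rewrite c1_add1 !c1_lmul1 !c1_om /c1 /add1_f /lmul1_f /=.
by rewrite !mulF81 !mulF80 addF80 add0F8.
Qed.
Lemma Om2_decomp (T : Om2) : T =
  add2 (add2 (lmul2 (T (o0, o0)) (om2 o0 o0)) (lmul2 (T (o0, o1)) (om2 o0 o1)))
       (add2 (lmul2 (T (o1, o0)) (om2 o1 o0)) (lmul2 (T (o1, o1)) (om2 o1 o1))).
Proof.
apply: c2_inj; rewrite c2_add2_4 !c2_lmul2 !c2_om2 /c2 /add2_f /lmul2_f /=.
by rewrite !mulF81 !mulF80 !addF80 !add0F8.
Qed.

(* The left Leibniz rule determines nabla from
   N0 = nabla omega^1 and N1 = nabla omega^2; the right Leibniz rule at a = x, y
   determines sigma on the basis, since dx = omega^1 and dy = omega^2. *)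

Lemma d_x : d xA = om o0.
Proof. by apply/ffunP => i; case: (I2P i) => ->; rewrite !ffunE. Qed.
Lemma d_y : d yA = om o1.
Proof. by apply/ffunP => i; case: (I2P i) => ->; rewrite !ffunE. Qed.

Lemma nabla_coord (nabla : {ffun Om1 -> Om2}) :
  [forall w : Om1, forall v : Om1, nabla (add1 w v) == add2 (nabla w) (nabla v)] ->
  [forall a : A, forall w : Om1,
     nabla (lmul1 a w) == add2 (lmul2 a (nabla w)) (tens (d a) w)] ->
  forall w, c2 (nabla w) = nabla_c (c2 (nabla (om o0))) (c2 (nabla (om o1))) (c1 w).
Proof.
move=> /forallP Ha /forallP Hl w.
rewrite {1}(Om1_decomp w) (eqP (forallP (Ha _) _)) !(eqP (forallP (Hl _) _)).
by rewrite c2_add2_4 !c2_lmul2 !c2_tens !c1_d !c1_om.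
Qed.

Definition sigma_basis (sigma : {ffun Om2 -> Om2}) : V4 (V4 A) :=
  mkV4 (c2 (sigma (om2 o0 o0))) (c2 (sigma (om2 o0 o1)))
       (c2 (sigma (om2 o1 o0))) (c2 (sigma (om2 o1 o1))).

Lemma sigma_coord (sigma : {ffun Om2 -> Om2}) : bimod_map2 sigma ->
  forall T, c2 (sigma T) = sigma_c (sigma_basis sigma) (c2 T).
Proof.
case/and3P => /forallP Ha /forallP Hl _ T; set rhs := sigma_c _ _.
rewrite (Om2_decomp T) !(eqP (forallP (Ha _) _)) !(eqP (forallP (Hl _) _)).
by rewrite c2_add2_4 !c2_lmul2.
Qed.

Lemma metric_coord (g : Om2) (nabla : {ffun Om1 -> Om2}) (sigma : {ffun Om2 -> Om2}) N0 N1 :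
  (forall w, c2 (nabla w) = nabla_c N0 N1 (c1 w)) ->
  (forall T, c2 (sigma T) = sigma_c (braiding_c N0 N1) (c2 T)) ->
  c3 (\big[add3/zero3]_(ij : 'I_2 * 'I_2)
         add3 (tens21 (nabla (lmul1 (g ij) (om ij.1))) (om ij.2))
              (sigma_id sigma (tens12 (lmul1 (g ij) (om ij.1)) (nabla (om ij.2)))))
  = metric_c (c2 g) N0 N1.
Proof.
move=> Hn Hs; rewrite (@c3_big22 _ (fun i j =>
  metric_term_f addF8 mulF8 id ract_tab deriv_tab N0 N1 (coef2 (c2 g) i j) i j)) //.
move=> p; rewrite c3_add3 c3_tens21 Hn c1_lmul1 !c1_om coef2_c2.
by rewrite (c3_sigma_id _ Hs) c3_tens12 c1_lmul1 c1_om Hn c1_om.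
Qed.

Section QLCCoordinates.
Variables (g : Om2) (nabla : {ffun Om1 -> Om2}) (sigma : {ffun Om2 -> Om2}).
Hypothesis qlc : is_QLC g nabla sigma.
Let N0 := c2 (nabla (om o0)).
Let N1 := c2 (nabla (om o1)).

Lemma QLC_nabla w : c2 (nabla w) = nabla_c N0 N1 (c1 w).
Proof. by case/and5P: qlc => Ha Hl _ _ _; apply: nabla_coord. Qed.

Lemma QLC_braiding : sigma_basis sigma = braiding_c N0 N1.
Proof.
case/and5P: qlc => _ _ /forallP Hr _ _.
have E (i : 'I_2) (a : A) (j : 'I_2) : d a = om j ->
    c2 (sigma (om2 i j)) = add2_c (nabla_c N0 N1 (rmul1_c (basis1_c (bo i)) a))
                                  (rmul2_c (c2 (nabla (om i))) a).
  move=> Ed; have := eqP (forallP (Hr a) (om i)).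
  rewrite Ed -/(om2 i j) => /(congr1 c2).
  by rewrite c2_add2 c2_rmul2 QLC_nabla c1_rmul1 c1_om => /add2_solve.
by rewrite /sigma_basis (E o0 xA o0 d_x) (E o0 yA o1 d_y) (E o1 xA o0 d_x) (E o1 yA o1 d_y).
Qed.

Lemma QLC_sigma T : c2 (sigma T) = sigma_c (braiding_c N0 N1) (c2 T).
Proof. by case/and5P: qlc => _ _ _ Hb _; rewrite (sigma_coord Hb) QLC_braiding. Qed.

(* Torsion freeness on the basis: wedge (nabla omega^i) = d omega^i = 0. *)
Lemma QLC_torsion : wedge_c N0 = zeroA /\ wedge_c N1 = zeroA.
Proof.
case/and5P: qlc => _ _ _ _ /andP [/forallP Ht _].
have d1_om i : d1 (om i) = zeroA by rewrite d1_coord c1_om; case: (bo i).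
by split; rewrite -wedge_coord (eqP (Ht _)) d1_om.
Qed.

Lemma QLC_metric : metric_c (c2 g) N0 N1 = zero8.
Proof.
case/and5P: qlc => _ _ _ _ /andP [_ /eqP Hm].
by rewrite -(metric_coord _ QLC_nabla QLC_sigma) Hm c3_zero3.
Qed.

End QLCCoordinates.

(* Necessary form of an inverse metric.  Being left linear, ( , ) is
   determined by its Gram values G_ij = (omega^i, omega^j):
   (P) = sum_ij P_ij G_ij. *)

Definition pair_c (G P : V4 A) : A :=
  addF8 (addF8 (mulF8 (v00 P) (v00 G)) (mulF8 (v01 P) (v01 G)))
        (addF8 (mulF8 (v10 P) (v10 G)) (mulF8 (v11 P) (v11 G))).

Definition gram (ip : {ffun Om2 -> A}) : V4 A :=
  mkV4 (ip (om2 o0 o0)) (ip (om2 o0 o1)) (ip (om2 o1 o0)) (ip (om2 o1 o1)).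

Lemma inv_metric_coord g ip : is_inv_metric g ip -> forall T, ip T = pair_c (gram ip) (c2 T).
Proof.
case/and5P => /forallP Ha /forallP Hl _ _ _ T; set rhs := pair_c _ _.
by rewrite (Om2_decomp T) !(eqP (forallP (Ha _) _)) !(eqP (forallP (Hl _) _)).
Qed.

Definition inv_left_term (g G : V4 A) (eta : A * A) (i j : bool) : A * A :=
  lmul1_c (pair_c G (tens_c eta (lmul1_c (coef2 g i j) (basis1_c i)))) (basis1_c j).
Definition inv_right_term (g G : V4 A) (eta : A * A) (i j : bool) : A * A :=
  rmul1_c (lmul1_c (coef2 g i j) (basis1_c i)) (pair_c G (tens_c (basis1_c j) eta)).
Definition sum_I22 (f : bool -> bool -> A * A) : A * A :=
  add1_c (add1_c (f false false) (f false true)) (add1_c (f true false) (f true true)).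
Definition inv_left_c (g G : V4 A) (eta : A * A) : A * A := sum_I22 (inv_left_term g G eta).
Definition inv_right_c (g G : V4 A) (eta : A * A) : A * A := sum_I22 (inv_right_term g G eta).

Lemma c1_big22 (F : 'I_2 * 'I_2 -> Om1) (f : bool -> bool -> A * A) :
  (forall p, c1 (F p) = f (bo p.1) (bo p.2)) -> c1 (\big[add1/zero1]_p F p) = sum_I22 f.
Proof. by move=> E; rewrite big_I22 !c1_add1 !E. Qed.

Section InverseCoordinates.
Variables (g : Om2) (ip : {ffun Om2 -> A}) (G : V4 A).
Hypothesis ip_G : forall T, ip T = pair_c G (c2 T).

Lemma inv_left_coord eta :
  c1 (\big[add1/zero1]_(ij : 'I_2 * 'I_2)
        lmul1 (ip (tens eta (lmul1 (g ij) (om ij.1)))) (om ij.2)) =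
  inv_left_c (c2 g) G (c1 eta).
Proof.
rewrite (@c1_big22 _ (inv_left_term (c2 g) G (c1 eta))) //.
by move=> p; rewrite c1_lmul1 ip_G c2_tens c1_lmul1 !c1_om coef2_c2.
Qed.

Lemma inv_right_coord eta :
  c1 (\big[add1/zero1]_(ij : 'I_2 * 'I_2)
        rmul1 (lmul1 (g ij) (om ij.1)) (ip (tens (om ij.2) eta))) =
  inv_right_c (c2 g) G (c1 eta).
Proof.
rewrite (@c1_big22 _ (inv_right_term (c2 g) G (c1 eta))) //.
by move=> p; rewrite c1_rmul1 ip_G c2_tens c1_lmul1 !c1_om coef2_c2.
Qed.

End InverseCoordinates.

(* The Gram values of an inverse metric satisfy both identities on the basis;
   this pins them down among the finitely many candidates. *)
Definition gram_ok (g G : V4 A) : bool :=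
  [&& inv_left_c g G (basis1_c false) == basis1_c false,
      inv_left_c g G (basis1_c true) == basis1_c true,
      inv_right_c g G (basis1_c false) == basis1_c false &
      inv_right_c g G (basis1_c true) == basis1_c true].

Lemma gram_okP g ip : is_inv_metric g ip -> gram_ok (c2 g) (gram ip).
Proof.
move=> H; have ip_G := inv_metric_coord H.
case/and5P: H => _ _ _ /forallP Hl /forallP Hr.
have Hleft i : inv_left_c (c2 g) (gram ip) (basis1_c (bo i)) = basis1_c (bo i).
  by rewrite -c1_om -(inv_left_coord _ ip_G) (eqP (Hl _)).
have Hright i : inv_right_c (c2 g) (gram ip) (basis1_c (bo i)) = basis1_c (bo i).
  by rewrite -c1_om -(inv_right_coord _ ip_G) (eqP (Hr _)).
by rewrite /gram_ok (Hleft o0) (Hleft o1) (Hright o0) (Hright o1) !eqxx.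
Qed.

(* The checks quantify over the
   explicit list of the 8 elements of A, which keeps them fast to evaluate. *)

Definition allA : seq A := [:: mkA false false false; mkA true false false;
  mkA false true false; mkA true true false; mkA false false true;
  mkA true false true; mkA false true true; mkA true true true].
Lemma allA_spec a : a \in allA.
Proof. by case: a => [[[] []] []]. Qed.
Definition allA2 : seq (A * A) := allpairs pair allA allA.
Lemma allA2_spec w : w \in allA2.
Proof. by case: w => a b; apply: allpairs_f; apply: allA_spec. Qed.

Definition map4 (T1 T2 : Type) (f : T1 -> T2) (R : V4 T1) : V4 T2 :=
  mkV4 (f (v00 R)) (f (v01 R)) (f (v10 R)) (f (v11 R)).

Lemma sum4_add p0 p1 p2 p3 q0 q1 q2 q3 s0 s1 s2 s3 :
  addF8 (addF8 (mulF8 (addF8 p0 q0) s0) (mulF8 (addF8 p1 q1) s1))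
        (addF8 (mulF8 (addF8 p2 q2) s2) (mulF8 (addF8 p3 q3) s3)) =
  addF8 (addF8 (addF8 (mulF8 p0 s0) (mulF8 p1 s1)) (addF8 (mulF8 p2 s2) (mulF8 p3 s3)))
        (addF8 (addF8 (mulF8 q0 s0) (mulF8 q1 s1)) (addF8 (mulF8 q2 s2) (mulF8 q3 s3))).
Proof. by rewrite !mulF8Dl (addF8ACA (mulF8 p0 s0)) (addF8ACA (mulF8 p2 s2)) addF8ACA. Qed.
Lemma sum4_lmul a p0 p1 p2 p3 s0 s1 s2 s3 :
  addF8 (addF8 (mulF8 (mulF8 a p0) s0) (mulF8 (mulF8 a p1) s1))
        (addF8 (mulF8 (mulF8 a p2) s2) (mulF8 (mulF8 a p3) s3)) =
  mulF8 a (addF8 (addF8 (mulF8 p0 s0) (mulF8 p1 s1)) (addF8 (mulF8 p2 s2) (mulF8 p3 s3))).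
Proof. by rewrite -!mulF8A -!mulF8Dr. Qed.

Lemma sigma_c_add S P Q : sigma_c S (add2_c P Q) = add2_c (sigma_c S P) (sigma_c S Q).
Proof. by congr mkV4; apply: sum4_add. Qed.
Lemma sigma_c_lmul S a P : sigma_c S (lmul2_c a P) = lmul2_c a (sigma_c S P).
Proof. by congr mkV4; apply: sum4_lmul. Qed.
Lemma pair_c_add G P Q : pair_c G (add2_c P Q) = addF8 (pair_c G P) (pair_c G Q).
Proof. exact: sum4_add. Qed.
Lemma pair_c_lmul G a P : pair_c G (lmul2_c a P) = mulF8 a (pair_c G P).
Proof. exact: sum4_lmul. Qed.

Lemma linear_sigma_c (f : V4 A -> V4 A) R P :
  (forall X Y, f (add2_c X Y) = add2_c (f X) (f Y)) ->
  (forall a X, f (lmul2_c a X) = lmul2_c a (f X)) ->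
  f (sigma_c R P) = sigma_c (map4 f R) P.
Proof. by move=> Ha Hl; rewrite /sigma_f !Ha !Hl. Qed.
Lemma linear_pair_c (f : V4 A -> A) R P :
  (forall X Y, f (add2_c X Y) = addF8 (f X) (f Y)) ->
  (forall a X, f (lmul2_c a X) = mulF8 a (f X)) ->
  f (sigma_c R P) = pair_c (map4 f R) P.
Proof. by move=> Ha Hl; rewrite /sigma_f !Ha !Hl. Qed.
Lemma pair_c_mulr G P a : mulF8 (pair_c G P) a = pair_c (map4 (mulF8^~ a) G) P.
Proof. by rewrite /pair_c /map4 /= !mulF8A -!mulF8Dl. Qed.

(* The right action on the tensor square is the linear map sending the basis
   tensor omega^i (x) omega^j to omega^i (x) (omega^j a). *)
Definition ract2 (a : A) : V4 (V4 A) :=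
  mkV4 (tens_c (basis1_c false) (rmul1_c (basis1_c false) a))
       (tens_c (basis1_c false) (rmul1_c (basis1_c true) a))
       (tens_c (basis1_c true) (rmul1_c (basis1_c false) a))
       (tens_c (basis1_c true) (rmul1_c (basis1_c true) a)).
Lemma tens_lmul c w v : tens_c (lmul1_c c w) v = lmul2_c c (tens_c w v).
Proof. by case: w => w0 w1; congr mkV4; rewrite /= -!mulF8A -!mulF8Dr. Qed.
Lemma rmul2_sigma P a : rmul2_c P a = sigma_c (ract2 a) P.
Proof. by rewrite /rmul2_f !tens_lmul. Qed.

Lemma deriv_tab_add a a' : deriv_tab (addF8 a a') = add1_c (deriv_tab a) (deriv_tab a').
Proof. by move: a a' => [[[] []] []] [[[] []] []]. Qed.
Lemma tens_addl w w' v : tens_c (add1_c w w') v = add2_c (tens_c w v) (tens_c w' v).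
Proof. by congr mkV4; rewrite /= !mulF8Dl addF8ACA. Qed.
Lemma lmul2_addl a b N : lmul2_c (addF8 a b) N = add2_c (lmul2_c a N) (lmul2_c b N).
Proof. by congr mkV4; apply: mulF8Dl. Qed.
Lemma add2_ACA P Q R S : add2_c (add2_c P Q) (add2_c R S) = add2_c (add2_c P R) (add2_c Q S).
Proof. by congr mkV4; apply: addF8ACA. Qed.
Lemma nabla_c_add N0 N1 w v :
  nabla_c N0 N1 (add1_c w v) = add2_c (nabla_c N0 N1 w) (nabla_c N0 N1 v).
Proof.
rewrite /nabla_f -[(add1_c w v).1]/(addF8 w.1 v.1) -[(add1_c w v).2]/(addF8 w.2 v.2).
rewrite !deriv_tab_add !lmul2_addl !tens_addl.
by rewrite (add2_ACA (lmul2_c w.1 N0)) (add2_ACA (lmul2_c w.2 N1)) add2_ACA.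
Qed.

Definition nabla_of (N0 N1 : V4 A) : {ffun Om1 -> Om2} := [ffun w => mk2 (nabla_c N0 N1 (c1 w))].
Definition sigma_of (S : V4 (V4 A)) : {ffun Om2 -> Om2} := [ffun T => mk2 (sigma_c S (c2 T))].
Lemma c2_nabla_of N0 N1 w : c2 (nabla_of N0 N1 w) = nabla_c N0 N1 (c1 w).
Proof. by rewrite ffunE c2_mk2. Qed.
Lemma c2_sigma_of S T : c2 (sigma_of S T) = sigma_c S (c2 T).
Proof. by rewrite ffunE c2_mk2. Qed.

Definition qlc_ok (beta : A) (N0 N1 : V4 A) : bool :=
  let S := braiding_c N0 N1 in
  [&& all (fun a => all (fun w => nabla_c N0 N1 (lmul1_c a w) ==
         add2_c (lmul2_c a (nabla_c N0 N1 w)) (tens_c (deriv_tab a) w)) allA2) allA,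
      all (fun a => all (fun w => nabla_c N0 N1 (rmul1_c w a) ==
         add2_c (rmul2_c (nabla_c N0 N1 w) a) (sigma_c S (tens_c w (deriv_tab a)))) allA2) allA,
      all (fun a => map4 (sigma_c S) (ract2 a) == map4 (sigma_c (ract2 a)) S) allA,
      all (fun w => wedge_c (nabla_c N0 N1 w) == d1_c w) allA2 &
      metric_c (lmul2_c beta g0_c) N0 N1 == zero8].

Lemma qlc_okP beta N0 N1 : qlc_ok beta N0 N1 ->
  is_QLC (gmetric beta) (nabla_of N0 N1) (sigma_of (braiding_c N0 N1)).
Proof.
case/and5P => /allP Hleft /allP Hright /allP Hbraid /allP Htors /eqP Hmet.
set S := braiding_c N0 N1.
have S_add := sigma_c_add S; have S_lmul := sigma_c_lmul S.
apply/and5P; split.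
- apply/forallP => w; apply/forallP => v; apply/eqP; apply: c2_inj.
  by rewrite c2_add2 !c2_nabla_of c1_add1 nabla_c_add.
- apply/forallP => a; apply/forallP => w; apply/eqP; apply: c2_inj.
  rewrite c2_add2 c2_lmul2 c2_tens !c2_nabla_of c1_lmul1 c1_d.
  by apply/eqP; move/allP: (Hleft _ (allA_spec a)); apply; apply: allA2_spec.
- apply/forallP => a; apply/forallP => w; apply/eqP; apply: c2_inj.
  rewrite c2_add2 c2_rmul2 c2_sigma_of c2_tens !c2_nabla_of c1_rmul1 c1_d.
  by apply/eqP; move/allP: (Hright _ (allA_spec a)); apply; apply: allA2_spec.
- apply/and3P; split.
  + apply/forallP => T; apply/forallP => U; apply/eqP; apply: c2_inj.
    by rewrite c2_add2 !c2_sigma_of c2_add2 S_add.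
  + apply/forallP => a; apply/forallP => T; apply/eqP; apply: c2_inj.
    by rewrite c2_lmul2 !c2_sigma_of c2_lmul2 S_lmul.
  + apply/forallP => a; apply/forallP => T; apply/eqP; apply: c2_inj.
    rewrite c2_rmul2 !c2_sigma_of c2_rmul2 !rmul2_sigma.
    rewrite (linear_sigma_c _ _ S_add S_lmul).
    rewrite (linear_sigma_c _ _ (sigma_c_add (ract2 a)) (sigma_c_lmul (ract2 a))).
    by rewrite (eqP (Hbraid _ (allA_spec a))).
- apply/andP; split.
  + apply/forallP => w; apply/eqP.
    by rewrite wedge_coord c2_nabla_of d1_coord; apply/eqP/Htors/allA2_spec.
  + apply/eqP; apply: c3_inj.
    by rewrite c3_zero3 (metric_coord _ (c2_nabla_of N0 N1) (c2_sigma_of S)) c2_gmetric.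
Qed.

Definition pair_of (G : V4 A) : {ffun Om2 -> A} := [ffun T => pair_c G (c2 T)].

Definition inv_metric_ok (g G : V4 A) : bool :=
  all (fun eta => (inv_left_c g G eta == eta) && (inv_right_c g G eta == eta)) allA2 &&
  all (fun a => map4 (pair_c G) (ract2 a) == map4 (mulF8^~ a) G) allA.

Lemma inv_metric_okP g G : inv_metric_ok (c2 g) G -> is_inv_metric g (pair_of G).
Proof.
case/andP => /allP Hinv /allP Hr.
have ip_G T : pair_of G T = pair_c G (c2 T) by rewrite ffunE.
apply/and5P; split.
- apply/forallP => T; apply/forallP => U; apply/eqP.
  by rewrite !ip_G c2_add2 pair_c_add.
- apply/forallP => a; apply/forallP => T; apply/eqP.
  by rewrite !ip_G c2_lmul2 pair_c_lmul.
- apply/forallP => a; apply/forallP => T; apply/eqP.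
  rewrite !ip_G c2_rmul2 rmul2_sigma pair_c_mulr.
  rewrite (linear_pair_c _ _ (pair_c_add G) (pair_c_lmul G)).
  by rewrite (eqP (Hr _ (allA_spec a))).
- apply/forallP => eta; apply/eqP; apply: c1_inj.
  rewrite (inv_left_coord _ ip_G).
  by case/andP: (Hinv _ (allA2_spec (c1 eta))) => /eqP.
- apply/forallP => eta; apply/eqP; apply: c1_inj.
  rewrite (inv_right_coord _ ip_G).
  by case/andP: (Hinv _ (allA2_spec (c1 eta))) => _ /eqP.
Qed.

(* F_2-polynomials in variables indexed by nat are
   lists of monomials, a monomial being a list of variables (x_i^2 = x_i on
   boolean points, so monomials are sets).  [pev e p] evaluates p at the point
   e; normalisation sorts the monomials and cancels equal pairs. *)

Definition smono := seq nat.
Definition spoly := seq smono.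

Fixpoint mono_le (m1 m2 : smono) : bool :=
  match m1, m2 with
  | [::], _ => true
  | _ :: _, [::] => false
  | a :: s, b :: t => (a < b) || ((a == b) && mono_le s t)
  end.
Fixpoint cancel_pairs (s : spoly) : spoly :=
  match s with
  | a :: ((b :: t) as s') => if a == b then cancel_pairs t else a :: cancel_pairs s'
  | _ => s
  end.
Definition pnorm (p : spoly) : spoly := cancel_pairs (sort mono_le p).
Definition mmul (m1 m2 : smono) : smono := sort leq (undup (m1 ++ m2)).
Definition padd (p q : spoly) : spoly := pnorm (p ++ q).
Definition pmul (p q : spoly) : spoly := pnorm (allpairs mmul p q).

Definition mev (e : nat -> bool) (m : smono) : bool := all e m.
Definition pev (e : nat -> bool) (p : spoly) : bool := foldr (fun m b => mev e m (+) b) false p.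

Section PolyEval.
Variable e : nat -> bool.

Lemma pev_cat p q : pev e (p ++ q) = pev e p (+) pev e q.
Proof. by elim: p => //= m p ->; rewrite addbA. Qed.
Lemma pev_perm p q : perm_eq p q -> pev e p = pev e q.
Proof.
have pev_big r : pev e r = \big[addb/false]_(m <- r) mev e m.
  by elim: r => [|m r IH]; rewrite ?big_nil ?big_cons //= IH.
by move=> Hp; rewrite !pev_big (perm_big _ Hp).
Qed.
Lemma pev_cancel_pairs p : pev e (cancel_pairs p) = pev e p.
Proof.
elim: {p}(size p).+1 {-2}p (ltnSn (size p)) => // n IH [|a [|b t]] // Hs.
have -> : cancel_pairs [:: a, b & t] =
          if a == b then cancel_pairs t else a :: cancel_pairs (b :: t) by [].
rewrite /= ltnS in Hs; case: eqP => [<-|_].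
  by rewrite IH; [rewrite /= addbA addbb | exact: ltnW Hs].
by rewrite -[pev e (a :: _)]/(mev e a (+) pev e (cancel_pairs (b :: t))) IH.
Qed.
Lemma pev_pnorm p : pev e (pnorm p) = pev e p.
Proof. by rewrite /pnorm pev_cancel_pairs; apply: pev_perm; rewrite perm_sort. Qed.
Lemma pev_padd p q : pev e (padd p q) = pev e p (+) pev e q.
Proof. by rewrite /padd pev_pnorm pev_cat. Qed.
Lemma pev_pmul p q : pev e (pmul p q) = pev e p && pev e q.
Proof.
have mev_mmul m1 m2 : mev e (mmul m1 m2) = mev e m1 && mev e m2.
  by rewrite /mev /mmul all_sort all_undup all_cat.
rewrite /pmul pev_pnorm; elim: p => [|m p IH] //.
rewrite [allpairs _ _ _]/= pev_cat IH [pev e (m :: p)]/= andb_addl; congr (_ (+) _).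
elim: q {IH} => [|m' q IHq] /=; first by rewrite andbF.
by rewrite mev_mmul IHq andb_addr.
Qed.

End PolyEval.

Lemma pev_eq_in e e' (q : spoly) : (forall m, m \in q -> {in m, e =1 e'}) -> pev e q = pev e' q.
Proof.
elim: q => //= m q IH H; rewrite IH => [|m' Hm']; last by apply: H; rewrite inE Hm' orbT.
by congr (_ (+) _); apply: eq_in_all; apply: H; rewrite mem_head.
Qed.

(* Symbolic elements of A: triples of polynomials (the bits of a0 + a1 y + a2 y^2). *)
Definition pA := (spoly * spoly * spoly)%type.
Definition paddA (a b : pA) : pA := (padd a.1.1 b.1.1, padd a.1.2 b.1.2, padd a.2 b.2).
Definition pscal (c : spoly) (b : pA) : pA := (pmul c b.1.1, pmul c b.1.2, pmul c b.2).
Definition pmuly (b : pA) : pA := (b.2, b.1.1, padd b.1.2 b.2).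
Definition pmulA (a b : pA) : pA :=
  paddA (pscal a.1.1 b) (paddA (pscal a.1.2 (pmuly b)) (pscal a.2 (pmuly (pmuly b)))).
Definition pbool (b : bool) : spoly := if b then [:: [::]] else [::].
Definition pconst (c : A) : pA := (pbool c.1.1, pbool c.1.2, pbool c.2).
Definition pvar (i : nat) : pA := ([:: [:: 3 * i]], [:: [:: 3 * i + 1]], [:: [:: 3 * i + 2]]).
Definition evalA (e : nat -> bool) (a : pA) : A := (pev e a.1.1, pev e a.1.2, pev e a.2).

Section EvalA.
Variable e : nat -> bool.

Lemma xorb_addb a b : xorb a b = a (+) b.
Proof. by case: a. Qed.
Lemma evalA_add a b : evalA e (paddA a b) = addF8 (evalA e a) (evalA e b).
Proof. by rewrite /evalA /paddA !pev_padd /addF8 /mkA /= !xorb_addb. Qed.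
Lemma evalA_mul a b : evalA e (pmulA a b) = mulF8 (evalA e a) (evalA e b).
Proof.
have scal c b' : evalA e (pscal c b') = scalA (pev e c) (evalA e b').
  by rewrite /evalA /pscal !pev_pmul; case: (pev e c); case: b' => [[? ?] ?].
have muly_eval b' : evalA e (pmuly b') = muly (evalA e b').
  by rewrite /evalA /pmuly pev_padd /muly /mkA /= xorb_addb.
by rewrite /pmulA !evalA_add !scal !muly_eval.
Qed.
Lemma evalA_const c : evalA e (pconst c) = c.
Proof. by case: c => [[[] []] []]. Qed.
Lemma evalA_pvar i : evalA e (pvar i) = (e (3 * i), e (3 * i + 1), e (3 * i + 2)).
Proof. by rewrite /evalA /pvar /pev /mev /= !andbT !addbF. Qed.

End EvalA.

Definition map2 (T1 T2 : Type) (f : T1 -> T2) (w : T1 * T1) : T2 * T2 := (f w.1, f w.2).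
Definition map8 (T1 T2 : Type) (f : T1 -> T2) (X : V8 T1) : V8 T2 :=
  mkV8 (f (e000 X)) (f (e001 X)) (f (e010 X)) (f (e011 X))
       (f (e100 X)) (f (e101 X)) (f (e110 X)) (f (e111 X)).

Section FormulaMorphism.
Variables (T1 T2 : Type) (ad1 mu1 : T1 -> T1 -> T1) (k1 : A -> T1).
Variables (ad2 mu2 : T2 -> T2 -> T2) (k2 : A -> T2) (phi : T1 -> T2).
Hypothesis phi_add : forall a b, phi (ad1 a b) = ad2 (phi a) (phi b).
Hypothesis phi_mul : forall a b, phi (mu1 a b) = mu2 (phi a) (phi b).
Hypothesis phi_const : forall c, phi (k1 c) = k2 c.

Lemma phi_frob al be ga a :
  phi (frob_lin ad1 mu1 k1 al be ga a) = frob_lin ad2 mu2 k2 al be ga (phi a).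
Proof. by rewrite /frob_lin !phi_add !phi_mul !phi_const. Qed.
Lemma map4_ract_frob a : map4 phi (ract_frob ad1 mu1 k1 a) = ract_frob ad2 mu2 k2 (phi a).
Proof. by rewrite /map4 /ract_frob /= !phi_frob. Qed.
Lemma map2_deriv_frob a : map2 phi (deriv_frob ad1 mu1 k1 a) = deriv_frob ad2 mu2 k2 (phi a).
Proof. by rewrite /map2 /deriv_frob /= !phi_frob. Qed.

Variables (rf1 : T1 -> V4 T1) (df1 : T1 -> T1 * T1).
Variables (rf2 : T2 -> V4 T2) (df2 : T2 -> T2 * T2).
Hypothesis phi_ract : forall a, map4 phi (rf1 a) = rf2 (phi a).
Hypothesis phi_deriv : forall a, map2 phi (df1 a) = df2 (phi a).

Lemma map2_basis1 b : map2 phi (basis1_f k1 b) = basis1_f k2 b.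
Proof. by case: b; rewrite /map2 /basis1_f /zero_f /one_f /= !phi_const. Qed.
Lemma map2_lmul1 a w : map2 phi (lmul1_f mu1 a w) = lmul1_f mu2 (phi a) (map2 phi w).
Proof. by rewrite /map2 /= !phi_mul. Qed.
Lemma map2_rmul1 w a :
  map2 phi (rmul1_f ad1 mu1 rf1 w a) = rmul1_f ad2 mu2 rf2 (map2 phi w) (phi a).
Proof.
rewrite /rmul1_f -(phi_ract a) /map2 /map4 /=.
by rewrite !phi_add !phi_mul.
Qed.
Lemma map4_add2 P Q : map4 phi (add2_f ad1 P Q) = add2_f ad2 (map4 phi P) (map4 phi Q).
Proof. by rewrite /map4 /= !phi_add. Qed.
Lemma map4_lmul2 a P : map4 phi (lmul2_f mu1 a P) = lmul2_f mu2 (phi a) (map4 phi P).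
Proof. by rewrite /map4 /= !phi_mul. Qed.
Lemma map4_tens w v :
  map4 phi (tens_f ad1 mu1 rf1 w v) = tens_f ad2 mu2 rf2 (map2 phi w) (map2 phi v).
Proof. by rewrite /tens_f -!map2_rmul1. Qed.
Lemma map4_basis2 i j : map4 phi (basis2_f ad1 mu1 k1 rf1 i j) = basis2_f ad2 mu2 k2 rf2 i j.
Proof. by rewrite /basis2_f map4_tens !map2_basis1. Qed.
Lemma map4_rmul2 P a :
  map4 phi (rmul2_f ad1 mu1 k1 rf1 P a) = rmul2_f ad2 mu2 k2 rf2 (map4 phi P) (phi a).
Proof. by rewrite /rmul2_f !map4_add2 !map4_tens !map2_lmul1 !map2_rmul1 !map2_basis1. Qed.
Lemma map8_add3 X Y : map8 phi (add3_f ad1 X Y) = add3_f ad2 (map8 phi X) (map8 phi Y).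
Proof. by rewrite /map8 /= !phi_add. Qed.
Lemma map8_tens12 w U :
  map8 phi (tens12_f ad1 mu1 rf1 w U) = tens12_f ad2 mu2 rf2 (map2 phi w) (map4 phi U).
Proof. by rewrite /tens12_f -!map2_rmul1. Qed.
Lemma map8_tens21 P v :
  map8 phi (tens21_f ad1 mu1 k1 rf1 P v) = tens21_f ad2 mu2 k2 rf2 (map4 phi P) (map2 phi v).
Proof. by rewrite /tens21_f 3!map8_add3 !map8_tens12 !map4_tens !map2_lmul1 !map2_basis1. Qed.
Lemma map8_sigma_id (s1 : V4 T1 -> V4 T1) (s2 : V4 T2 -> V4 T2) X :
  (forall P, map4 phi (s1 P) = s2 (map4 phi P)) ->
  map8 phi (sigma_id_f ad1 mu1 k1 rf1 s1 X) = sigma_id_f ad2 mu2 k2 rf2 s2 (map8 phi X).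
Proof.
move=> Hs; have Ht c i j l : map8 phi (sigma_id_term_f ad1 mu1 k1 rf1 s1 c i j l) =
    sigma_id_term_f ad2 mu2 k2 rf2 s2 (phi c) i j l.
  by rewrite /sigma_id_term_f map8_tens21 Hs map4_lmul2 map4_basis2 map2_basis1.
by rewrite /sigma_id_f 7!map8_add3 !Ht.
Qed.
Lemma map4_nabla N0 N1 w :
  map4 phi (nabla_f ad1 mu1 k1 rf1 df1 N0 N1 w) =
  nabla_f ad2 mu2 k2 rf2 df2 (map4 phi N0) (map4 phi N1) (map2 phi w).
Proof. by rewrite /nabla_f !map4_add2 !map4_lmul2 !map4_tens !phi_deriv !map2_basis1. Qed.
Lemma map4_sigma S P :
  map4 phi (sigma_f ad1 mu1 S P) = sigma_f ad2 mu2 (map4 (map4 phi) S) (map4 phi P).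
Proof. by rewrite /sigma_f !map4_add2 !map4_lmul2. Qed.
Lemma map4_braiding N0 N1 :
  map4 (map4 phi) (braiding_f ad1 mu1 k1 rf1 df1 N0 N1) =
  braiding_f ad2 mu2 k2 rf2 df2 (map4 phi N0) (map4 phi N1).
Proof.
have E (a b c e : V4 T1) :
  map4 (map4 phi) (mkV4 a b c e) = mkV4 (map4 phi a) (map4 phi b) (map4 phi c) (map4 phi e).
  by [].
rewrite /braiding_f E; congr mkV4.
all: by rewrite map4_add2 map4_nabla map4_rmul2 map2_rmul1 map2_basis1 !phi_const.
Qed.
Lemma map8_metric g N0 N1 :
  map8 phi (metric_f ad1 mu1 k1 rf1 df1 g N0 N1) =
  metric_f ad2 mu2 k2 rf2 df2 (map4 phi g) (map4 phi N0) (map4 phi N1).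
Proof.
have Hs P : map4 phi (sigma_f ad1 mu1 (braiding_f ad1 mu1 k1 rf1 df1 N0 N1) P) =
    sigma_f ad2 mu2 (braiding_f ad2 mu2 k2 rf2 df2 (map4 phi N0) (map4 phi N1)) (map4 phi P).
  by rewrite map4_sigma map4_braiding.
rewrite /metric_f /metric_term_f 7!map8_add3 !map8_tens21 !(map8_sigma_id _ Hs).
by rewrite !map8_tens12 !map4_nabla !map2_lmul1 !map2_basis1.
Qed.

End FormulaMorphism.

(* Torsion freeness wedge N = 0 determines the last coordinate of N:
   N11 = y^2 (y N00 + N01 + N10), as 1 + y has inverse y^2. *)
Lemma torsion_free_last a b c e : wedge_c (mkV4 a b c e) = zeroA ->
  e = mulF8 xA (addF8 (mulF8 yA a) (addF8 b c)).
Proof.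
rewrite /wedge_f /one_f /= !mulF81 addF8A => /esym /addF8_solve; rewrite add0F8 => He.
by rewrite -[e in LHS]mul_x_1y (mulF8C (addF8 oneA yA)) He -addF8A (mulF8C a).
Qed.

(* The generic torsion-free tensor whose free coordinates are the variables
   9i, ..., 9i + 8, and the symbolic metric defect of the generic connection. *)
Definition torsion_free_sym (i : nat) : V4 pA :=
  let a := pvar (3 * i) in let b := pvar (3 * i + 1) in let c := pvar (3 * i + 2) in
  mkV4 a b c (pmulA (pconst xA) (paddA (pmulA (pconst yA) a) (paddA b c))).
Definition metric_sym (beta : A) : V8 pA :=
  metric_f paddA pmulA pconst (ract_frob paddA pmulA pconst) (deriv_frob paddA pmulA pconst)
           (map4 pconst (lmul2_c beta g0_c)) (torsion_free_sym 0) (torsion_free_sym 1).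

Definition bitsA (a : A) : seq bool := [:: a.1.1; a.1.2; a.2].
Definition tensor_bits (N : V4 A) : seq bool := bitsA (v00 N) ++ bitsA (v01 N) ++ bitsA (v10 N).
Definition point (N0 N1 : V4 A) (i : nat) : bool := nth false (tensor_bits N0 ++ tensor_bits N1) i.

Lemma torsion_free_sym_eval N0 N1 : wedge_c N0 = zeroA -> wedge_c N1 = zeroA ->
  map4 (evalA (point N0 N1)) (torsion_free_sym 0) = N0 /\
  map4 (evalA (point N0 N1)) (torsion_free_sym 1) = N1.
Proof.
case: N0 N1 => [a0 b0 c0 e0] [a1 b1 c1 e1] /torsion_free_last -> /torsion_free_last ->.
rewrite /map4 /torsion_free_sym /= !(evalA_mul, evalA_add, evalA_const, evalA_pvar).
by case: a0 => [[? ?] ?]; case: b0 => [[? ?] ?]; case: c0 => [[? ?] ?];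
   case: a1 => [[? ?] ?]; case: b1 => [[? ?] ?]; case: c1 => [[? ?] ?].
Qed.

Lemma metric_sym_eval e beta :
  map8 (evalA e) (metric_sym beta) =
  metric_c (lmul2_c beta g0_c) (map4 (evalA e) (torsion_free_sym 0))
                               (map4 (evalA e) (torsion_free_sym 1)).
Proof.
have eval_const c : evalA e (pconst c) = id c by exact: evalA_const.
have ract_eval a : map4 (evalA e) (ract_frob paddA pmulA pconst a) = ract_tab (evalA e a).
  by rewrite (map4_ract_frob (evalA_add e) (evalA_mul e) eval_const) ract_frob_tab.
have deriv_eval a : map2 (evalA e) (deriv_frob paddA pmulA pconst a) = deriv_tab (evalA e a).
  by rewrite (map2_deriv_frob (evalA_add e) (evalA_mul e) eval_const) deriv_frob_tab.
rewrite /metric_sym (map8_metric (evalA_add e) (evalA_mul e) eval_const ract_eval deriv_eval).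
have -> : map4 (evalA e) (map4 pconst (lmul2_c beta g0_c)) = lmul2_c beta g0_c.
  by case: (lmul2_c beta g0_c) => *; rewrite /map4 /= !evalA_const.
by [].
Qed.

Definition defect_polys (M : V8 pA) : seq spoly :=
  [:: (e000 M).1.1; (e000 M).1.2; (e000 M).2; (e001 M).1.1; (e001 M).1.2; (e001 M).2;
      (e010 M).1.1; (e010 M).1.2; (e010 M).2; (e011 M).1.1; (e011 M).1.2; (e011 M).2;
      (e100 M).1.1; (e100 M).1.2; (e100 M).2; (e101 M).1.1; (e101 M).1.2; (e101 M).2;
      (e110 M).1.1; (e110 M).1.2; (e110 M).2; (e111 M).1.1; (e111 M).1.2; (e111 M).2].

Lemma defect_polys_zero e M :
  map8 (evalA e) M = zero8 -> forall p, p \in defect_polys M -> pev e p = false.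
Proof.
case: M => x0 x1 x2 x3 x4 x5 x6 x7; rewrite /map8 /evalA /zero8 /zeroA /mkA /=.
case=> E00 E01 E02 E10 E11 E12 E20 E21 E22 E30 E31 E32 E40 E41 E42 E50 E51 E52
       E60 E61 E62 E70 E71 E72 p; rewrite !inE.
by do 23! (case/orP => [/eqP -> // | ]); move/eqP => ->.
Qed.

(* A sum of defect polynomials whose monomials each
   involve only variables of N0 (below 9) or only variables of N1 splits as
   f(N0) + h(N1); on a solution f(N0) = h(N1).  Solutions are found by matching
   the vectors of values of the f's on torsion-free N0 with those of the h's
   on torsion-free N1, then checking all 24 equations on the matches. *)

Definition psum (P : seq spoly) (c : seq nat) : spoly :=
  foldr padd [::] [seq nth [::] P i | i <- c].
Definition low_mono (m : smono) : bool := all (fun i => i < 9) m.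
Definition separate (p : spoly) : spoly * spoly := (filter low_mono p, filter (predC low_mono) p).
Definition high_only (q : spoly) : bool := all (fun m => all (fun i => 9 <= i) m) q.
Definition separated_sums (P : seq spoly) (hints : seq (seq nat)) : seq (spoly * spoly) :=
  [seq separate p | p <- [seq psum P c | c <- hints] & high_only (separate p).2].

Definition low_point (N0 : V4 A) (i : nat) : bool := nth false (tensor_bits N0) i.
Definition high_point (N1 : V4 A) (i : nat) : bool := nth false (tensor_bits N1) (i - 9).

Lemma psum_zero e P c : (forall p, p \in P -> pev e p = false) -> pev e (psum P c) = false.
Proof.
move=> H; elim: c => //= i c IH; rewrite pev_padd IH addbF.
by case: (ltnP i (size P)) => Hi; [apply: H; rewrite mem_nth | rewrite nth_default].
Qed.

Lemma pev_separate N0 N1 p : high_only (separate p).2 ->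
  pev (point N0 N1) p = pev (low_point N0) (separate p).1 (+) pev (high_point N1) (separate p).2.
Proof.
move=> Hh.
have Hp : perm_eq (filter low_mono p ++ filter (predC low_mono) p) p by rewrite perm_filterC.
rewrite -(pev_perm _ Hp) pev_cat.
congr (_ (+) _); apply: pev_eq_in => m.
- rewrite mem_filter => /andP [/allP Hm _] i /Hm Hi.
  by rewrite /point /low_point nth_cat Hi.
- move/allP: Hh => /[apply] /allP Hm i /Hm Hi.
  by rewrite /point /high_point nth_cat ltnNge Hi.
Qed.

Definition allV4 : seq (V4 A) :=
  allpairs (fun ab ce : A * A => mkV4 ab.1 ab.2 ce.1 ce.2) allA2 allA2.
Lemma allV4_spec P : P \in allV4.
Proof.
case: P => a b c e.
exact: (allpairs_f (fun ab ce : A * A => mkV4 ab.1 ab.2 ce.1 ce.2) (allA2_spec (a, b))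
                   (allA2_spec (c, e))).
Qed.
Definition torsion_free : seq (V4 A) := [seq N <- allV4 | wedge_c N == zeroA].

(* [vanish e P]: all polynomials of P vanish at e.  The explicit conditionals
   make evaluation stop at the first failure. *)
Fixpoint vanish (e : nat -> bool) (P : seq spoly) : bool :=
  if P is p :: P' then (if pev e p then false else vanish e P') else true.
Lemma vanishP e P : (forall p, p \in P -> pev e p = false) -> vanish e P.
Proof.
elim: P => //= p P IH H; rewrite H ?mem_head //; apply: IH => q Hq.
by apply: H; rewrite inE Hq orbT.
Qed.

Definition solutions (beta : A) (hints : seq (seq nat)) : seq (V4 A * V4 A) :=
  let P := defect_polys (metric_sym beta) in
  let S := separated_sums P hints in
  let keyed := [seq (N1, [seq pev (high_point N1) q.2 | q <- S]) | N1 <- torsion_free] in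
  flatten [seq let key := [seq pev (low_point N0) q.1 | q <- S] in
             [seq (N0, K.1) | K <- keyed &
                if key == K.2 then vanish (point N0 K.1) P else false]
           | N0 <- torsion_free].

Lemma solutions_complete beta hints N0 N1 : wedge_c N0 = zeroA -> wedge_c N1 = zeroA ->
  metric_c (lmul2_c beta g0_c) N0 N1 = zero8 -> (N0, N1) \in solutions beta hints.
Proof.
move=> H0 H1 HM; pose e := point N0 N1.
set P := defect_polys (metric_sym beta).
have HP p : p \in P -> pev e p = false.
  apply: defect_polys_zero; case: (torsion_free_sym_eval H0 H1) => E0 E1.
  by rewrite metric_sym_eval E0 E1.
set S := separated_sums P hints.
have keys_eq : [seq pev (low_point N0) q.1 | q <- S] = [seq pev (high_point N1) q.2 | q <- S].
  apply/eq_in_map => q /mapP [p]; rewrite mem_filter => /andP [Hh Hp] ->.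
  move: Hp Hh => /mapP [c _ ->] Hh.
  have := psum_zero c HP; rewrite /e (pev_separate _ _ Hh).
  by case: (pev (low_point N0) _); case: (pev (high_point N1) _).
have tf N : wedge_c N = zeroA -> N \in torsion_free by rewrite mem_filter allV4_spec => ->.
rewrite /solutions -/P -/S.
set keyed := [seq (N, [seq pev (high_point N) q.2 | q <- S]) | N <- torsion_free].
have K1 : (N1, [seq pev (high_point N1) q.2 | q <- S]) \in keyed.
  by apply: (map_f (fun N => (N, [seq pev (high_point N) q.2 | q <- S]))); apply: tf.
apply/flattenP; eexists; first exact: (map_f _ (tf _ H0)).
apply/mapP; exists (N1, [seq pev (high_point N1) q.2 | q <- S]) => //.
by rewrite mem_filter K1 andbT keys_eq eqxx; apply: vanishP.
Qed.

Lemma nabla_c_basis N0 N1 b : nabla_c N0 N1 (basis1_c b) = if b then N1 else N0.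
Proof.
case: b; case: N0 => a0 b0 c0 e0; case: N1 => a1 b1 c1 e1.
all: rewrite /nabla_f /add2_f /lmul2_f /tens_f /rmul1_f /=.
all: by rewrite !mul1F8 !mul0F8 ?addF80 ?add0F8.
Qed.

Definition connection_of (s : V4 A * V4 A) : {ffun Om1 -> Om2} * {ffun Om2 -> Om2} :=
  (nabla_of s.1 s.2, sigma_of (braiding_c s.1 s.2)).

Lemma connection_of_inj : injective connection_of.
Proof.
move=> [s0 s1] [t0 t1] [E _].
have E0 := congr1 (fun f : {ffun Om1 -> Om2} => c2 (f (om o0))) E.
have E1 := congr1 (fun f : {ffun Om1 -> Om2} => c2 (f (om o1))) E.
by move: E0 E1; rewrite /= !c2_nabla_of !c1_om !nabla_c_basis /= => -> ->.
Qed.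

(* Delta y = (nabla omega^2) and Delta y^2 = (nabla omega^1), paired by ( , ). *)
Definition lap_c (G : V4 A) (s : V4 A * V4 A) : A * A := (pair_c G s.2, pair_c G s.1).

Lemma lapl_of_inj u v u' v' : lapl_of u v = lapl_of u' v' -> (u, v) = (u', v').
Proof.
move=> E; have Ey := congr1 (fun f : {ffun A -> A} => f yA) E.
have Ex := congr1 (fun f : {ffun A -> A} => f xA) E.
by move: Ey Ex; rewrite /= !ffunE /= !addF80 !add0F8 => -> ->.
Qed.

Definition solutions_ok (beta : A) (G : V4 A) (L : seq (V4 A * V4 A))
    (laps : seq (A * A)) (n : nat) : bool :=
  [&& inv_metric_ok (lmul2_c beta g0_c) G,
      all (fun s => qlc_ok beta s.1 s.2) L,
      uniq L,
      all (fun s => all (fun a => pair_c G (nabla_c s.1 s.2 (deriv_tab a)) ==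
             addF8 (scalA a.1.2 (lap_c G s).1) (scalA a.2 (lap_c G s).2)) allA) L,
      all (fun s => lap_c G s \in laps) L,
      size L == n * size laps &
      all (fun uv => count (fun s => lap_c G s == uv) L == n) laps].

Section Classification.
Variables (beta : A) (G : V4 A) (L : seq (V4 A * V4 A)) (laps : seq (A * A)) (n : nat).
Hypothesis L_ok : solutions_ok beta G L laps n.
Hypothesis L_complete : forall N0 N1, wedge_c N0 = zeroA -> wedge_c N1 = zeroA ->
  metric_c (lmul2_c beta g0_c) N0 N1 = zero8 -> (N0, N1) \in L.

Lemma QLCs_eq p : (p \in QLCs (gmetric beta)) = (p \in map connection_of L).
Proof.
case/and5P: L_ok => _ /allP Hqlc _ _ _.
rewrite inE; apply/idP/idP; last by case/mapP => s /Hqlc /qlc_okP H ->.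
case: p => nabla sigma /= H.
set N0 := c2 (nabla (om o0)); set N1 := c2 (nabla (om o1)).
have HL : (N0, N1) \in L.
  case: (QLC_torsion H) => T0 T1; apply: L_complete => //.
  by rewrite -c2_gmetric; exact: (QLC_metric H).
have -> : (nabla, sigma) = connection_of (N0, N1).
  congr pair; [apply/ffunP => w | apply/ffunP => T]; apply: c2_inj.
  - by rewrite c2_nabla_of (QLC_nabla H).
  - by rewrite c2_sigma_of (QLC_sigma H).
exact: map_f.
Qed.

Lemma laplacian_connection_of (ip : {ffun Om2 -> A}) : (forall T, ip T = pair_c G (c2 T)) ->
  forall s, s \in L -> laplacian ip (connection_of s).1 = lapl_of (lap_c G s).1 (lap_c G s).2.
Proof.
move=> ip_G s Hs; case/and5P: L_ok => _ _ _ /allP Hlap _.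
apply/ffunP => a; rewrite /laplacian /lapl_of ffunE [in RHS]ffunE ip_G /= c2_nabla_of c1_d.
by apply/eqP; move/allP: (Hlap _ Hs); apply; apply: allA_spec.
Qed.

Lemma laplacians_of_solutions (ip : {ffun Om2 -> A}) : (forall T, ip T = pair_c G (c2 T)) ->
  [/\ #|QLCs (gmetric beta)| = (n * size [seq lapl_of uv.1 uv.2 | uv <- laps])%N,
      forall p, p \in QLCs (gmetric beta) ->
        laplacian ip p.1 \in [seq lapl_of uv.1 uv.2 | uv <- laps] &
      forall Lap, Lap \in [seq lapl_of uv.1 uv.2 | uv <- laps] ->
        #|[set p in QLCs (gmetric beta) | laplacian ip p.1 == Lap]| = n].
Proof.
move=> ip_G; case/and5P: L_ok => _ _ HuL _ /and3P [/allP Hin /eqP Hsize /allP Hcount].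
have uniq_map L' : uniq L' -> uniq (map connection_of L').
  by move=> HL'; rewrite (map_inj_in_uniq (in2W connection_of_inj)).
split.
- by rewrite (eq_card QLCs_eq) (card_uniqP (uniq_map _ HuL)) !size_map.
- move=> p; rewrite QLCs_eq => /mapP [s Hs ->].
  by rewrite (laplacian_connection_of ip_G Hs); apply: map_f; exact: Hin.
- move=> _ /mapP [uv Huv ->].
  have E : [set p in QLCs (gmetric beta) | laplacian ip p.1 == lapl_of uv.1 uv.2] =i
           map connection_of [seq s <- L | lap_c G s == uv].
    move=> p; rewrite inE QLCs_eq; apply/andP/mapP.
    + case=> /mapP [s Hs ->] /eqP; rewrite (laplacian_connection_of ip_G Hs) => Hl.
      exists s => //; rewrite mem_filter Hs andbT; move: Hl.
      by case: (lap_c G s) => u v /lapl_of_inj ->; case: uv {Huv}.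
    + case=> s; rewrite mem_filter => /andP [/eqP Hu Hs] ->; split; first exact: map_f.
      by rewrite (laplacian_connection_of ip_G Hs) Hu.
  rewrite (eq_card E) (card_uniqP (uniq_map _ (filter_uniq _ HuL))).
  by rewrite size_map size_filter; apply/eqP; apply: Hcount.
Qed.

End Classification.

Definition inv_grams (beta : A) : seq (V4 A) := [seq G <- allV4 | gram_ok (lmul2_c beta g0_c) G].
Definition classification_ok (beta : A) (hints : seq (seq nat)) (laps : seq (A * A)) (n : nat) :=
  if inv_grams beta is [:: G] then solutions_ok beta G (solutions beta hints) laps n else false.

Lemma classification beta hints laps n : classification_ok beta hints laps n ->
  QLC_laplacians (gmetric beta) [seq lapl_of uv.1 uv.2 | uv <- laps] n.
Proof.
rewrite /classification_ok; case Gs_eq: (inv_grams beta) => [|G []] // Hok.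
split.
  by exists (pair_of G); apply: inv_metric_okP; rewrite c2_gmetric; case/andP: Hok.
move=> ip Hinv; have ip_G T : ip T = pair_c G (c2 T).
  have : gram ip \in inv_grams beta by rewrite mem_filter -c2_gmetric (gram_okP Hinv) allV4_spec.
  by rewrite Gs_eq inE => /eqP <-; exact: inv_metric_coord Hinv T.
exact (laplacians_of_solutions Hok (@solutions_complete beta hints) ip_G).
Qed.

(* Search hints: sets of indices of defect polynomials whose sum separates
   the variables of N0 and N1 (found by F_2-linear algebra on the symbolic
   defect).  They only prune the search; completeness does not depend on them. *)
Definition hints_y2 : seq (seq nat) :=
  [:: [:: 1; 2; 3; 5; 9; 10; 15; 16]; [:: 0; 2; 3; 5; 6; 7; 9; 11; 12; 13; 15; 17];
      [:: 0; 1; 2; 4; 5; 18]; [:: 1; 2; 4; 5; 7; 13; 19]; [:: 0; 1; 4; 5; 6; 12; 20];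
      [:: 0; 1; 3; 4; 5; 6; 7; 12; 13; 21]; [:: 0; 2; 3; 4; 6; 7; 9; 12; 13; 15; 22];
      [:: 0; 1; 3; 4; 6; 7; 9; 12; 13; 15; 23]].
Definition hints_1y2 : seq (seq nat) :=
  [:: [:: 5; 8; 14]; [:: 0; 1; 3; 4; 5; 6; 7; 9; 10; 12; 13; 15; 16];
      [:: 0; 1; 2; 5; 6; 7; 11; 12; 13; 17]; [:: 0; 1; 2; 5; 7; 13; 18]; [:: 1; 2; 5; 19];
      [:: 0; 1; 5; 6; 7; 12; 13; 20]; [:: 2; 5; 9; 15; 21];
      [:: 0; 1; 2; 4; 6; 7; 12; 13; 22]; [:: 2; 23]].
Definition hints_1y : seq (seq nat) :=
  [:: [:: 4; 7; 13]; [:: 2; 8; 10; 14; 16]; [:: 1; 4; 5; 11; 17];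
      [:: 0; 1; 2; 4; 8; 14; 18]; [:: 1; 2; 8; 14; 19]; [:: 0; 1; 4; 6; 8; 12; 14; 20];
      [:: 1; 2; 3; 8; 14; 21]; [:: 1; 22]; [:: 1; 2; 3; 5; 8; 9; 14; 15; 23]].
Definition hints_y : seq (seq nat) :=
  [:: [:: 3; 4; 5; 6; 7; 8; 12; 13; 14]; [:: 1; 3; 5; 7; 10; 13; 16];
      [:: 0; 1; 2; 4; 9; 11; 15; 17]; [:: 0; 1; 2; 3; 4; 5; 6; 12; 18];
      [:: 1; 2; 3; 4; 5; 6; 7; 12; 13; 19]; [:: 0; 1; 3; 4; 5; 20];
      [:: 0; 2; 7; 9; 13; 15; 21]; [:: 0; 1; 2; 5; 9; 15; 22]; [:: 0; 2; 5; 7; 13; 23]].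

Lemma certificate_y2 : classification_ok xA hints_y2
  [:: (zeroA, xA); (zeroA, addF8 oneA (addF8 yA xA)); (xA, oneA)] 4.
Proof. by vm_compute. Qed.
Lemma certificate_1y2 : classification_ok (addF8 oneA xA) hints_1y2
  [:: (yA, zeroA); (addF8 oneA (addF8 yA xA), zeroA);
      (addF8 yA xA, addF8 oneA (addF8 yA xA))] 4.
Proof. by vm_compute. Qed.
Lemma certificate_1y : classification_ok (addF8 oneA yA) hints_1y
  [:: (xA, xA); (yA, yA); (oneA, addF8 oneA yA)] 4.
Proof. by vm_compute. Qed.
Lemma certificate_y : classification_ok yA hints_y [:: (zeroA, zeroA)] 4.
Proof. by vm_compute. Qed.

Lemma eigen1_by_cases (Lap : {ffun A -> A}) (S : {set A}) :
  (forall v : A, ((v != zeroA) && (Lap v == v)) = (v \in S)) -> eigen1 Lap = S.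
Proof. by move=> H; apply/setP => v; rewrite inE H. Qed.

Theorem mainTheorem9 :
  let y2 := xA in
  let one_y := addF8 oneA yA in
  let one_y2 := addF8 oneA xA in
  let y_y2 := addF8 yA xA in
  let one_y_y2 := addF8 oneA (addF8 yA xA) in
  (* beta = y^2 *)
  [/\ QLC_laplacians (gmetric y2)
        [:: lapl_of zeroA y2; lapl_of zeroA one_y_y2; lapl_of y2 oneA] 4,
  (* beta = 1 + y^2 *)
      QLC_laplacians (gmetric one_y2)
        [:: lapl_of yA zeroA; lapl_of one_y_y2 zeroA; lapl_of y_y2 one_y_y2] 4,
  (* beta = 1 + y *)
      QLC_laplacians (gmetric one_y)
        [:: lapl_of y2 y2; lapl_of yA yA; lapl_of oneA one_y] 4,
  (* beta = y *)
      QLC_laplacians (gmetric yA) [:: lapl_of zeroA zeroA] 4 &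
  (* nonzero solutions of Delta v = v, in the order listed *)
      [/\ [/\ eigen1 (lapl_of zeroA y2) = [set y2],
              eigen1 (lapl_of zeroA one_y_y2) = [set one_y_y2] &
              eigen1 (lapl_of y2 oneA) = set0],
          [/\ eigen1 (lapl_of yA zeroA) = [set yA],
              eigen1 (lapl_of one_y_y2 zeroA) = [set one_y_y2] &
              eigen1 (lapl_of y_y2 one_y_y2) = set0],
          [/\ eigen1 (lapl_of y2 y2) = [set y2],
              eigen1 (lapl_of yA yA) = [set yA] &
              eigen1 (lapl_of oneA one_y) = set0] &
          eigen1 (lapl_of zeroA zeroA) = set0]].
Proof.
move=> y2 one_y one_y2 y_y2 one_y_y2; split.
- exact: classification certificate_y2.
- exact: classification certificate_1y2.
- exact: classification certificate_1y.
- exact: classification certificate_y.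
- rewrite /y2 /one_y /one_y2 /y_y2 /one_y_y2.
  split; [split|split|split|]; apply: eigen1_by_cases => v; rewrite ?inE ffunE;
  by case: v => [[[] []] []].
Qed.
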